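(* There exist a Cantor set $W\subseteq\mathbb{R}^2$, a metric on $W$ compatible with its topology, and a homeomorphism $G\colon W\to W$ which is not transitive, has the (LRS) property with respect to that metric, and whose set of periodic points consists of a single fixed point.
   Context: A Cantor set is a compact metric space that is totally disconnected and has no isolated points. A map $f\colon X\to X$ on a metric space $(X,d)$ has the (LRS) (locally radially shrinking) property if for every $x\in X$ there is $\varepsilon_x>0$ such that $0<d(x,y)<\varepsilon_x$ implies $d(f(x),f(y))<d(x,y)$. $G$ is transitive if for all nonempty open $U,V\subseteq W$ there is $n\in\mathbb{N}$ with $G^n(U)\cap V\neq\emptyset$. A periodic point is $x$ with $G^n(x)=x$ for some $n\geq 1$. *)

From Stdlib Require Import Reals List.
Open Scope R_scope.

Definition euclid (p q : R * R) : R :=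
  sqrt ((fst p - fst q)^2 + (snd p - snd q)^2).

Definition is_metric_on {X : Type} (W : X -> Prop) (d : X -> X -> R) : Prop :=
  (forall x y, W x -> W y -> 0 <= d x y) /\
  (forall x y, W x -> W y -> (d x y = 0 <-> x = y)) /\
  (forall x y, W x -> W y -> d x y = d y x) /\
  (forall x y z, W x -> W y -> W z -> d x z <= d x y + d y z).

Definition ropen {X : Type} (W : X -> Prop) (d : X -> X -> R) (U : X -> Prop) : Prop :=
  (forall x, U x -> W x) /\
  (forall x, U x -> exists e, 0 < e /\ forall y, W y -> d x y < e -> U y).

Definition compatible {X : Type} (W : X -> Prop) (d1 d2 : X -> X -> R) : Prop :=
  forall U, ropen W d1 U <-> ropen W d2 U.

Definition compact_in {X : Type} (W : X -> Prop) (d : X -> X -> R) : Prop :=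
  forall (I : Type) (U : I -> X -> Prop),
    (forall i, ropen W d (U i)) ->
    (forall x, W x -> exists i, U i x) ->
    exists l : list I, forall x, W x -> exists i, In i l /\ U i x.

Definition connected_in {X : Type} (A : X -> Prop) (d : X -> X -> R) : Prop :=
  forall U V, ropen A d U -> ropen A d V ->
    (forall x, A x -> U x \/ V x) ->
    (forall x, ~ (U x /\ V x)) ->
    (exists x, U x) -> (exists x, V x) -> False.

Definition totally_disconnected {X : Type} (W : X -> Prop) (d : X -> X -> R) : Prop :=
  forall A : X -> Prop, (forall x, A x -> W x) -> connected_in A d ->
    forall x y, A x -> A y -> x = y.

Definition no_isolated_points {X : Type} (W : X -> Prop) (d : X -> X -> R) : Prop :=
  forall x, W x -> forall e, 0 < e -> exists y, W y /\ y <> x /\ d x y < e.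

Definition cantor_set {X : Type} (W : X -> Prop) (d : X -> X -> R) : Prop :=
  compact_in W d /\ totally_disconnected W d /\ no_isolated_points W d.

Definition maps_into {X : Type} (W : X -> Prop) (G : X -> X) : Prop :=
  forall x, W x -> W (G x).

Definition continuous_on {X : Type} (W : X -> Prop) (d : X -> X -> R) (G : X -> X) : Prop :=
  forall x, W x -> forall e, 0 < e -> exists del, 0 < del /\
    forall y, W y -> d x y < del -> d (G x) (G y) < e.

Definition homeomorphism_on {X : Type} (W : X -> Prop) (d : X -> X -> R) (G : X -> X) : Prop :=
  maps_into W G /\ continuous_on W d G /\
  exists H : X -> X, maps_into W H /\ continuous_on W d H /\
    (forall x, W x -> H (G x) = x) /\ (forall x, W x -> G (H x) = x).

Definition transitive_on {X : Type} (W : X -> Prop) (d : X -> X -> R) (G : X -> X) : Prop :=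
  forall U V, ropen W d U -> ropen W d V -> (exists x, U x) -> (exists x, V x) ->
    exists n : nat, (1 <= n)%nat /\ exists x, U x /\ V (Nat.iter n G x).

Definition LRS {X : Type} (W : X -> Prop) (d : X -> X -> R) (G : X -> X) : Prop :=
  forall x, W x -> exists ex, 0 < ex /\
    forall y, W y -> 0 < d x y < ex -> d (G x) (G y) < d x y.

Definition periodic_point {X : Type} (G : X -> X) (x : X) : Prop :=
  exists n : nat, (1 <= n)%nat /\ Nat.iter n G x = x.

(* W is a Cantor set on the x-axis made of a copy of the dyadic odometer,
   a Z-indexed chain of Cantor sets ("bushes") that accumulates on the odometer in the
   past and on a single point in the future, and that point. G acts as the odometer,
   moves each bush onto the next one and fixes the point. A bush is a nonempty open set
   disjoint from all its images, so G is not transitive; the odometer has no periodic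
   points, so the fixed point is the only periodic point.

   Points are coded by sequences of digits 0, 1, 2, placed on the line by base-5
   expansion. The metric is the first-difference ultrametric of a weight on code
   prefixes, chosen so that G shrinks small distances. On the odometer the weight of a
   prefix of a point decreases under binary increment at all lengths but at most one, so
   it does for all long prefixes. Inside the bushes the weight decays geometrically with
   depth, at a ratio that decreases along the chain, so deep inside a bush the next bush
   is lighter. *)

From Coquelicot Require Import Coquelicot.
From Stdlib Require Import Reals Lra Lia List ZArith Classical ClassicalEpsilon FunctionalExtensionality.
Import ListNotations.
Open Scope R_scope.
Set Bullet Behavior "Strict Subproofs".

Definition agree {A} (a b : nat -> A) (n : nat) : Prop := forall i, (i < n)%nat -> a i = b i.
Definition prefix {A} (a : nat -> A) (n : nat) : list A := map a (seq 0 n).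
Definition shift {A} (a : nat -> A) : nat -> A := fun k => a (S k).

Lemma least_witness (P : nat -> Prop) :
  (exists n, P n) -> exists n, P n /\ forall m, (m < n)%nat -> ~ P m.
Proof.
  intros [n Hn]. apply NNPP. intro H.
  assert (Hnone : forall k m, (m < k)%nat -> ~ P m).
  { induction k as [|k IH]; intros m Hm; [lia|].
    destruct (Nat.eq_dec m k) as [->|]; [|apply IH; lia].
    intro Pk. apply H. exists k. split; auto. }
  apply (Hnone (S n) n); auto.
Qed.

Section Prefixes.
Context {A : Type}.
Implicit Types (a b c : nat -> A) (n m : nat).

Lemma agree_weaken a b n m : (m <= n)%nat -> agree a b n -> agree a b m.
Proof. intros Hmn H i Hi. apply H. lia. Qed.

Lemma agree_sym a b n : agree a b n -> agree b a n.
Proof. intros H i Hi. symmetry. auto. Qed.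

Lemma agree_shift a b n : agree a b (S n) -> agree (shift a) (shift b) n.
Proof. intros H i Hi. apply H. lia. Qed.

Lemma length_prefix a n : length (prefix a n) = n.
Proof. unfold prefix. rewrite length_map, length_seq. reflexivity. Qed.

Lemma prefix_S a n : prefix a (S n) = prefix a n ++ [a n].
Proof. unfold prefix. rewrite seq_S, map_app. reflexivity. Qed.

Lemma prefix_S_cons a n : prefix a (S n) = a 0%nat :: prefix (shift a) n.
Proof. unfold prefix. simpl. f_equal. rewrite <- seq_shift, map_map. reflexivity. Qed.

Lemma nth_prefix a n i d : (i < n)%nat -> nth i (prefix a n) d = a i.
Proof.
  intro H. unfold prefix. rewrite nth_indep with (d' := a 0%nat) by (rewrite length_map, length_seq; auto).
  rewrite map_nth, seq_nth by auto. reflexivity.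
Qed.

Lemma prefix_eq_agree a b n : prefix a n = prefix b n <-> agree a b n.
Proof.
  split.
  - intros H i Hi. destruct n as [|n]; [lia|].
    rewrite <- (nth_prefix a (S n) i (a 0%nat) Hi), <- (nth_prefix b (S n) i (a 0%nat) Hi), H.
    reflexivity.
  - intro H. unfold prefix. apply map_ext_in. intros i Hi. apply in_seq in Hi. apply H. lia.
Qed.

Lemma firstn_prefix a n m : (m <= n)%nat -> firstn m (prefix a n) = prefix a m.
Proof.
  intro H. unfold prefix. rewrite firstn_map. f_equal.
  replace n with (m + (n - m))%nat by lia. rewrite seq_app, firstn_app, length_seq, Nat.sub_diag.
  simpl. rewrite firstn_all2 by (rewrite length_seq; lia). apply app_nil_r.
Qed.

Lemma first_difference a b :
  (exists n, a n <> b n) -> exists n, agree a b n /\ a n <> b n.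
Proof.
  intro H. destruct (least_witness _ H) as [n [Dn Hlt]].
  exists n. split; auto. intros i Hi. apply NNPP. apply Hlt, Hi.
Qed.

Lemma first_difference_unique a b n m :
  agree a b n -> a n <> b n -> agree a b m -> a m <> b m -> n = m.
Proof.
  intros Hn Dn Hm Dm. destruct (Nat.lt_trichotomy n m) as [L|[L|L]]; auto; exfalso.
  - apply Dn, Hm, L.
  - apply Dm, Hn, L.
Qed.

End Prefixes.

Definition prepend (l : list nat) (f : nat -> nat) (i : nat) : nat :=
  if (i <? length l)%nat then nth i l 0%nat else f (i - length l)%nat.

Lemma prepend_lt l f i : (i < length l)%nat -> prepend l f i = nth i l 0%nat.
Proof. intro H. unfold prepend. destruct (Nat.ltb_spec i (length l)); auto; lia. Qed.

Lemma prepend_ge l f i : (length l <= i)%nat -> prepend l f i = f (i - length l)%nat.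
Proof. intro H. unfold prepend. destruct (Nat.ltb_spec i (length l)); auto; lia. Qed.

Lemma prepend_nil f : prepend [] f = f.
Proof. apply functional_extensionality. intro i. unfold prepend. simpl. f_equal. lia. Qed.

Lemma prepend_cons d l f i :
  prepend (d :: l) f i = match i with 0%nat => d | S j => prepend l f j end.
Proof. unfold prepend. destruct i; simpl; auto. Qed.

Lemma shift_prepend_cons d l f : shift (prepend (d :: l) f) = prepend l f.
Proof. apply functional_extensionality. intro i. apply prepend_cons. Qed.

Lemma prepend_app l1 l2 f i : prepend (l1 ++ l2) f i = prepend l1 (prepend l2 f) i.
Proof.
  revert i; induction l1 as [|d l1 IH]; intro i.
  - rewrite prepend_nil. reflexivity.
  - simpl. rewrite !prepend_cons. destruct i; auto.
Qed.

Lemma prefix_prepend l f n : prefix (prepend l f) (length l + n) = l ++ prefix f n.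
Proof.
  revert f; induction l as [|d l IH]; intro f.
  - simpl. rewrite prepend_nil. reflexivity.
  - simpl length. rewrite Nat.add_succ_l, prefix_S_cons, shift_prepend_cons, IH. reflexivity.
Qed.

Lemma agree_prepend l f g n : agree f g n -> agree (prepend l f) (prepend l g) (length l + n).
Proof. intros H i Hi. unfold prepend. destruct (Nat.ltb_spec i (length l)); auto. apply H. lia. Qed.

Lemma agree_prepend_inv l f g n : agree (prepend l f) (prepend l g) (length l + n) -> agree f g n.
Proof.
  intros H i Hi. specialize (H (length l + i)%nat ltac:(lia)).
  rewrite !prepend_ge in H by lia. replace (length l + i - length l)%nat with i in H by lia. exact H.
Qed.

(** * Base-5 expansions with digits at most 2 *)

Definition digits3 (a : nat -> nat) : Prop := forall k, (a k <= 2)%nat.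
Definition expand5_term (a : nat -> nat) (k : nat) : R := INR (a k) * (/5) ^ S k.
Definition expand5 (a : nat -> nat) : R := Series (expand5_term a).

Lemma pow_inv5_pos n : 0 < (/5) ^ n.
Proof. apply pow_lt. lra. Qed.

Lemma ex_series_geom5 : ex_series (fun k => 2 * (/5) ^ S k).
Proof.
  apply ex_series_ext with (fun k => scal (2/5) ((/5) ^ k)).
  - intro k. unfold scal; simpl. unfold mult; simpl. field.
  - apply (ex_series_scal_l (K := R_AbsRing) (V := R_NormedModule)).
    apply ex_series_geom. rewrite Rabs_pos_eq; lra.
Qed.

Lemma Series_geom5 : Series (fun k => 2 * (/5) ^ S k) = /2.
Proof.
  rewrite (Series_ext _ (fun k => (2/5) * (/5) ^ k)) by (intro k; simpl; field).
  rewrite Series_scal_l, Series_geom by (rewrite Rabs_pos_eq; lra). field.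
Qed.

Lemma expand5_term_bounds a k : digits3 a -> 0 <= expand5_term a k <= 2 * (/5) ^ S k.
Proof.
  intro Ha. unfold expand5_term. pose proof (le_INR _ _ (Ha k)). pose proof (pos_INR (a k)).
  pose proof (pow_inv5_pos (S k)). simpl in *. split; nra.
Qed.

Lemma ex_series_expand5 a : digits3 a -> ex_series (expand5_term a).
Proof.
  intro Ha. apply (ex_series_le (K := R_AbsRing) (V := R_CompleteNormedModule) _ (fun k => 2 * (/5) ^ S k)).
  - intro k. destruct (expand5_term_bounds a k Ha).
    change (norm (expand5_term a k)) with (Rabs (expand5_term a k)). rewrite Rabs_pos_eq; lra.
  - apply ex_series_geom5.
Qed.

Lemma expand5_ext a b : (forall i, a i = b i) -> expand5 a = expand5 b.
Proof. intro H. apply Series_ext. intro k. unfold expand5_term. rewrite H. reflexivity. Qed.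

Lemma expand5_cons a : digits3 a -> expand5 a = INR (a 0%nat) / 5 + / 5 * expand5 (shift a).
Proof.
  intro Ha. unfold expand5. rewrite Series_incr_1 by (apply ex_series_expand5; auto).
  rewrite <- Series_scal_l. f_equal.
  - unfold expand5_term. simpl. field.
  - apply Series_ext. intro k. unfold expand5_term, shift. simpl. ring.
Qed.

Lemma expand5_bounds a : digits3 a -> 0 <= expand5 a <= /2.
Proof.
  intro Ha. split.
  - replace 0 with (Series (fun _ => 0 * 0)) by (rewrite Series_scal_l; ring).
    apply Series_le; [|apply ex_series_expand5; auto].
    intro n. rewrite Rmult_0_l. split; [lra|]. apply expand5_term_bounds, Ha.
  - rewrite <- Series_geom5. apply Series_le; [|apply ex_series_geom5].
    intro k. apply expand5_term_bounds, Ha.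
Qed.

Lemma digits3_shift a : digits3 a -> digits3 (shift a).
Proof. intros H k. apply H. Qed.

Lemma digits3_prepend l f : (forall x, In x l -> (x <= 2)%nat) -> digits3 f -> digits3 (prepend l f).
Proof.
  intros Hl Hf i. unfold prepend. destruct (Nat.ltb_spec i (length l)); auto.
  apply Hl, nth_In. auto.
Qed.

Lemma expand5_cons_diff a b :
  digits3 a -> digits3 b ->
  expand5 a - expand5 b = (INR (a 0%nat) - INR (b 0%nat)) / 5 + / 5 * (expand5 (shift a) - expand5 (shift b)).
Proof. intros Ha Hb. rewrite (expand5_cons a Ha), (expand5_cons b Hb). field. Qed.

Lemma expand5_close n a b :
  digits3 a -> digits3 b -> agree a b n -> Rabs (expand5 a - expand5 b) <= /2 * (/5) ^ n.
Proof.
  revert a b; induction n as [|n IH]; intros a b Ha Hb Hab.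
  - pose proof (expand5_bounds a Ha). pose proof (expand5_bounds b Hb). simpl. apply Rabs_le. lra.
  - rewrite expand5_cons_diff, (Hab 0%nat) by (auto; lia).
    specialize (IH _ _ (digits3_shift a Ha) (digits3_shift b Hb) (agree_shift a b n Hab)).
    replace ((INR (b 0%nat) - INR (b 0%nat)) / 5 + / 5 * (expand5 (shift a) - expand5 (shift b)))
      with (/ 5 * (expand5 (shift a) - expand5 (shift b))) by field.
    rewrite Rabs_mult, Rabs_pos_eq by lra. simpl. lra.
Qed.

Lemma INR_dist_ge1 m n : m <> n -> 1 <= Rabs (INR m - INR n).
Proof.
  intro H. destruct (Nat.lt_ge_cases m n) as [L|L].
  - apply le_INR in L. rewrite S_INR in L. rewrite Rabs_left1; lra.
  - assert (L' : (S n <= m)%nat) by lia. apply le_INR in L'. rewrite S_INR in L'. rewrite Rabs_pos_eq; lra.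
Qed.

(* Digits at most 2 leave a gap in base 5: expansions with different first digits
   are at least [1/5 - 1/10] apart. *)
Lemma expand5_apart_head a b :
  digits3 a -> digits3 b -> a 0%nat <> b 0%nat -> /10 <= Rabs (expand5 a - expand5 b).
Proof.
  intros Ha Hb E. rewrite expand5_cons_diff by auto.
  pose proof (expand5_bounds _ (digits3_shift a Ha)). pose proof (expand5_bounds _ (digits3_shift b Hb)).
  pose proof (INR_dist_ge1 _ _ E) as Hd.
  set (d := INR (a 0%nat) - INR (b 0%nat)) in *. set (s := expand5 (shift a) - expand5 (shift b)) in *.
  assert (Hs : Rabs s <= /2) by (apply Rabs_le; unfold s; lra).
  pose proof (Rabs_triang_inv (d / 5) (- (/ 5 * s))) as Htri.
  replace (d / 5 - - (/ 5 * s)) with (d / 5 + / 5 * s) in Htri by ring.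
  rewrite Rabs_Ropp in Htri. unfold Rdiv in *. rewrite !Rabs_mult, (Rabs_pos_eq (/5)) in Htri by lra. lra.
Qed.

Lemma expand5_apart n a b :
  digits3 a -> digits3 b -> ~ agree a b n -> /10 * (/5) ^ n <= Rabs (expand5 a - expand5 b).
Proof.
  revert a b; induction n as [|n IH]; intros a b Ha Hb Hab.
  - exfalso. apply Hab. intros i Hi. lia.
  - destruct (Nat.eq_dec (a 0%nat) (b 0%nat)) as [E|E].
    + assert (Hs : ~ agree (shift a) (shift b) n).
      { intro H'. apply Hab. intros [|i] Hi; auto. apply H'. lia. }
      specialize (IH _ _ (digits3_shift a Ha) (digits3_shift b Hb) Hs).
      rewrite expand5_cons_diff, E by auto.
      replace ((INR (b 0%nat) - INR (b 0%nat)) / 5 + / 5 * (expand5 (shift a) - expand5 (shift b)))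
        with (/ 5 * (expand5 (shift a) - expand5 (shift b))) by field.
      rewrite Rabs_mult, (Rabs_pos_eq (/5)) by lra. simpl. lra.
    + pose proof (expand5_apart_head a b Ha Hb E).
      pose proof (pow_lt_1_compat (/5) (S n) ltac:(lra) ltac:(lia)). lra.
Qed.

(** * The first-difference ultrametric of a weight on finite words *)

Section FirstDifferenceDistance.
Context {A : Type} (w : list A -> R).
Hypothesis w_pos : forall l, 0 < w l.
Hypothesis w_snoc : forall l x, w (l ++ [x]) <= w l.
Implicit Types (a b c : nat -> A).

Definition fd_dist a b : R :=
  match excluded_middle_informative (exists n, a n <> b n) with
  | left h => w (prefix a (proj1_sig (constructive_indefinite_description _ (first_difference a b h))))
  | right _ => 0
  end.

Lemma w_prefix_antitone a n m : (n <= m)%nat -> w (prefix a m) <= w (prefix a n).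
Proof. induction 1; [lra|]. rewrite prefix_S. eapply Rle_trans; [apply w_snoc|]. auto. Qed.

Lemma fd_dist_eq a b n : agree a b n -> a n <> b n -> fd_dist a b = w (prefix a n).
Proof.
  intros Hn Dn. unfold fd_dist. destruct excluded_middle_informative as [h|h].
  - destruct constructive_indefinite_description as [m [Hm Dm]]. simpl.
    rewrite (first_difference_unique a b m n); auto.
  - exfalso. apply h. eauto.
Qed.

Lemma fd_dist_same a b : (forall n, a n = b n) -> fd_dist a b = 0.
Proof.
  intro H. unfold fd_dist. destruct excluded_middle_informative as [[n Hn]|h]; auto.
  exfalso. auto.
Qed.

Lemma fd_dist_cases a b :
  (forall n, a n = b n) \/ exists n, agree a b n /\ a n <> b n /\ fd_dist a b = w (prefix a n).
Proof.
  destruct (classic (exists n, a n <> b n)) as [h|h].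
  - right. destruct (first_difference a b h) as [n [Hn Dn]]. exists n. auto using fd_dist_eq.
  - left. intro n. apply NNPP. intro X. apply h. eauto.
Qed.

Lemma fd_dist_nonneg a b : 0 <= fd_dist a b.
Proof.
  destruct (fd_dist_cases a b) as [H|[n [_ [_ ->]]]].
  - rewrite fd_dist_same; auto. lra.
  - left. apply w_pos.
Qed.

Lemma fd_dist_eq0 a b : fd_dist a b = 0 -> forall n, a n = b n.
Proof.
  intro H. destruct (fd_dist_cases a b) as [E|[n [_ [_ E]]]]; auto.
  pose proof (w_pos (prefix a n)). lra.
Qed.

Lemma fd_dist_sym a b : fd_dist a b = fd_dist b a.
Proof.
  destruct (fd_dist_cases a b) as [H|[n [Hn [Dn ->]]]].
  - rewrite !fd_dist_same; auto.
  - rewrite (fd_dist_eq b a n) by auto using agree_sym. f_equal. apply prefix_eq_agree, Hn.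
Qed.

Lemma fd_dist_ge a b n : ~ agree a b (S n) -> w (prefix a n) <= fd_dist a b.
Proof.
  intro Hab. destruct (fd_dist_cases a b) as [H|[m [Hm [Dm ->]]]].
  - exfalso. apply Hab. intros i _. auto.
  - apply w_prefix_antitone. destruct (Nat.le_gt_cases m n); auto.
    exfalso. apply Hab. intros i Hi. apply Hm. lia.
Qed.

Lemma fd_dist_lt_agree a b n : fd_dist a b < w (prefix a n) -> agree a b n.
Proof.
  intro H. apply NNPP. intro Hab. destruct n as [|n].
  - apply Hab. intros i Hi. lia.
  - pose proof (fd_dist_ge a b n Hab). pose proof (w_prefix_antitone a n (S n) (Nat.le_succ_diag_r n)). lra.
Qed.

Lemma fd_dist_le_agree a b n : agree a b n -> fd_dist a b <= w (prefix a n).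
Proof.
  intro H. destruct (fd_dist_cases a b) as [E|[m [Hm [Dm ->]]]].
  - rewrite fd_dist_same; auto. left. apply w_pos.
  - apply w_prefix_antitone. destruct (Nat.le_gt_cases n m); auto. exfalso. apply Dm, H. lia.
Qed.

Lemma fd_dist_ultra a b c : fd_dist a c <= Rmax (fd_dist a b) (fd_dist b c).
Proof.
  destruct (fd_dist_cases a c) as [E|[n [Hn [Dn ->]]]].
  - rewrite fd_dist_same by auto. eapply Rle_trans; [apply fd_dist_nonneg|apply Rmax_l].
  - destruct (classic (agree a b (S n))) as [Hab|Hab].
    + eapply Rle_trans; [|apply Rmax_r].
      replace (prefix a n) with (prefix b n)
        by (apply prefix_eq_agree, agree_sym, (agree_weaken a b (S n)); auto).
      apply fd_dist_ge. intro Hbc. apply Dn. rewrite (Hab n), (Hbc n); auto.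
    + eapply Rle_trans; [|apply Rmax_l]. apply fd_dist_ge, Hab.
Qed.

Lemma fd_dist_triangle a b c : fd_dist a c <= fd_dist a b + fd_dist b c.
Proof.
  pose proof (fd_dist_ultra a b c). pose proof (fd_dist_nonneg a b). pose proof (fd_dist_nonneg b c).
  unfold Rmax in *. destruct (Rle_dec (fd_dist a b) (fd_dist b c)); lra.
Qed.

End FirstDifferenceDistance.

(** * Little-endian binary words and the dyadic odometer *)

Definition b2n (b : bool) : nat := if b then 1%nat else 0%nat.

Lemma b2n_le b : (b2n b <= 1)%nat.
Proof. destruct b; simpl; lia. Qed.

Lemma b2n_inj b c : b2n b = b2n c -> b = c.
Proof. destruct b, c; simpl; auto; discriminate. Qed.

Fixpoint word_val (l : list bool) : nat :=
  match l with [] => 0%nat | b :: l' => (b2n b + 2 * word_val l')%nat end.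
Fixpoint word_inc (l : list bool) : list bool :=
  match l with [] => [] | false :: l' => true :: l' | true :: l' => false :: word_inc l' end.
Fixpoint word_dec (l : list bool) : list bool :=
  match l with [] => [] | true :: l' => false :: l' | false :: l' => true :: word_dec l' end.
Definition all_ones (l : list bool) : bool := forallb (fun b => b) l.
Definition all_zeros (l : list bool) : bool := forallb negb l.

Lemma length_word_inc l : length (word_inc l) = length l.
Proof. induction l as [|[] l IH]; simpl; auto. Qed.
Lemma length_word_dec l : length (word_dec l) = length l.
Proof. induction l as [|[] l IH]; simpl; auto. Qed.
Lemma word_dec_inc l : word_dec (word_inc l) = l.
Proof. induction l as [|[] l IH]; simpl; auto; rewrite IH; auto. Qed.
Lemma word_inc_dec l : word_inc (word_dec l) = l.
Proof. induction l as [|[] l IH]; simpl; auto; rewrite IH; auto. Qed.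
Lemma all_zeros_inc l : all_zeros (word_inc l) = all_ones l.
Proof. induction l as [|[] l IH]; simpl; auto. Qed.
Lemma all_ones_dec l : all_ones (word_dec l) = all_zeros l.
Proof. induction l as [|[] l IH]; simpl; auto. Qed.
Lemma all_ones_repeat l : all_ones l = true -> l = repeat true (length l).
Proof. induction l as [|[] l IH]; simpl; intros; auto; try discriminate. rewrite IH at 1; auto. Qed.
Lemma all_zeros_repeat l : all_zeros l = true -> l = repeat false (length l).
Proof. induction l as [|[] l IH]; simpl; intros; auto; try discriminate. rewrite IH at 1; auto. Qed.
Lemma all_ones_ones n : all_ones (repeat true n) = true.
Proof. induction n; simpl; auto. Qed.
Lemma all_zeros_zeros n : all_zeros (repeat false n) = true.
Proof. induction n; simpl; auto. Qed.
Lemma word_inc_ones n : word_inc (repeat true n) = repeat false n.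
Proof. induction n as [|n IH]; simpl; auto. rewrite IH; auto. Qed.
Lemma word_dec_zeros n : word_dec (repeat false n) = repeat true n.
Proof. induction n as [|n IH]; simpl; auto. rewrite IH; auto. Qed.

Lemma word_val_lt l : (word_val l < 2 ^ length l)%nat.
Proof. induction l as [|[] l IH]; simpl; lia. Qed.
Lemma word_val_inc l : all_ones l = false -> word_val (word_inc l) = S (word_val l).
Proof. induction l as [|[] l IH]; simpl; intros; try discriminate; auto. rewrite IH; auto. lia. Qed.
Lemma word_val_snoc l b : word_val (l ++ [b]) = (word_val l + 2 ^ length l * b2n b)%nat.
Proof. induction l as [|c l IH]; simpl; [lia|]. rewrite IH. lia. Qed.
Lemma word_val_zeros n : word_val (repeat false n) = 0%nat.
Proof. induction n as [|n IH]; simpl; auto. rewrite IH; auto. Qed.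
Lemma word_val_ones n : (word_val (repeat true n) + 1 = 2 ^ n)%nat.
Proof. induction n; simpl; lia. Qed.

Lemma word_val_inc_mod l : word_val (word_inc l) = ((word_val l + 1) mod 2 ^ length l)%nat.
Proof.
  destruct (all_ones l) eqn:E.
  - apply all_ones_repeat in E. rewrite E, word_inc_ones, word_val_zeros, repeat_length, word_val_ones.
    symmetry. apply Nat.Div0.mod_same.
  - rewrite word_val_inc, Nat.add_1_r by auto. symmetry. apply Nat.mod_small.
    pose proof (word_val_lt (word_inc l)) as Hlt. rewrite length_word_inc, word_val_inc in Hlt by auto. lia.
Qed.

Lemma word_val_iter_inc l k :
  word_val (Nat.iter k word_inc l) = ((word_val l + k) mod 2 ^ length l)%nat.
Proof.
  assert (Hlen : forall m, length (Nat.iter m word_inc l) = length l).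
  { induction m as [|m IH]; simpl; auto. rewrite length_word_inc. auto. }
  induction k as [|k IH]; simpl.
  - rewrite Nat.add_0_r. symmetry. apply Nat.mod_small, word_val_lt.
  - rewrite word_val_inc_mod, Hlen, IH, Nat.Div0.add_mod_idemp_l. f_equal. lia.
Qed.

Lemma firstn_word_inc k l : firstn k (word_inc l) = word_inc (firstn k l).
Proof. revert k; induction l as [|[] l IH]; intro k; destruct k; simpl; auto; rewrite ?IH; auto. Qed.
Lemma firstn_word_dec k l : firstn k (word_dec l) = word_dec (firstn k l).
Proof. revert k; induction l as [|[] l IH]; intro k; destruct k; simpl; auto; rewrite ?IH; auto. Qed.

Lemma word_inc_snoc l c : word_inc (l ++ [c]) = word_inc l ++ [if all_ones l then negb c else c].
Proof. induction l as [|b l IH]; [destruct c; reflexivity|]. destruct b; simpl; auto. rewrite IH. auto. Qed.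

Lemma firstn_S_nth (l : list bool) j : (j < length l)%nat -> firstn (S j) l = firstn j l ++ [nth j l false].
Proof.
  revert j; induction l as [|c l IH]; intros j H; simpl in H; [lia|].
  destruct j; [reflexivity|]. change (firstn (S (S j)) (c :: l)) with (c :: firstn (S j) l).
  rewrite IH by lia. reflexivity.
Qed.

Lemma nth_word_inc l j : (j < length l)%nat ->
  nth j (word_inc l) false = if all_ones (firstn j l) then negb (nth j l false) else nth j l false.
Proof.
  intro H. assert (E := firstn_word_inc (S j) l). rewrite (firstn_S_nth l j H) in E.
  rewrite (firstn_S_nth (word_inc l) j) in E by (rewrite length_word_inc; auto).
  rewrite word_inc_snoc, firstn_word_inc in E. apply app_inj_tail in E. apply E.
Qed.

(* Flipping the most significant bit moves the wrap-around of [word_inc] from the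
   words [1...1] to the words [1...10]; a sequence has at most one prefix of the
   latter form, whereas it may have infinitely many of the former. *)
Fixpoint flip_last (l : list bool) : list bool :=
  match l with [] => [] | b :: l' => match l' with [] => [negb b] | _ => b :: flip_last l' end end.
Definition flip_val (l : list bool) : nat := word_val (flip_last l).
Definition flip_maximal (l : list bool) : Prop := l = repeat true (length l - 1) ++ [false].

Lemma length_flip_last l : length (flip_last l) = length l.
Proof.
  induction l as [|b [|c l] IH]; auto.
  change (flip_last (b :: c :: l)) with (b :: flip_last (c :: l)). simpl in *. rewrite IH. reflexivity.
Qed.

Lemma flip_val_lt l : (flip_val l < 2 ^ length l)%nat.
Proof. unfold flip_val. rewrite <- length_flip_last. apply word_val_lt. Qed.

Lemma flip_last_cons b l : l <> [] -> flip_last (b :: l) = b :: flip_last l.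
Proof. intro H. destruct l; [congruence|]. reflexivity. Qed.

Lemma flip_maximal_ones m : flip_maximal (repeat true m ++ [false]).
Proof.
  unfold flip_maximal. rewrite length_app, repeat_length. simpl.
  replace (m + 1 - 1)%nat with m by lia. reflexivity.
Qed.

Lemma flip_val_inc l : l <> [] -> ~ flip_maximal l -> flip_val (word_inc l) = S (flip_val l).
Proof.
  unfold flip_val, flip_maximal. induction l as [|b l IH]; intros Hne Hmax; [congruence|].
  destruct (list_eq_dec Bool.bool_dec l []) as [->|Hl].
  - destruct b; simpl in *; auto. exfalso. apply Hmax. reflexivity.
  - destruct b; simpl word_inc; rewrite !flip_last_cons; auto.
    + simpl word_val. rewrite IH; auto; [simpl; lia|].
      intro Hb. apply Hmax. destruct l as [|c l]; [congruence|]. simpl length in *.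
      replace (S (S (length l)) - 1)%nat with (S (length l)) by lia.
      replace (S (length l) - 1)%nat with (length l) in Hb by lia. rewrite Hb at 1. reflexivity.
    + destruct l as [|[] l]; simpl; congruence.
Qed.

Fixpoint odometer (z : nat -> bool) (i : nat) : bool :=
  match i with
  | 0%nat => negb (z 0%nat)
  | S j => if z 0%nat then odometer (shift z) j else z (S j)
  end.
Fixpoint odometer_inv (z : nat -> bool) (i : nat) : bool :=
  match i with
  | 0%nat => negb (z 0%nat)
  | S j => if z 0%nat then z (S j) else odometer_inv (shift z) j
  end.

Lemma prefix_odometer z k : prefix (odometer z) k = word_inc (prefix z k).
Proof.
  revert z; induction k as [|k IH]; intro z; auto.
  rewrite !prefix_S_cons.
  replace (shift (odometer z)) with (if z 0%nat then odometer (shift z) else shift z)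
    by (apply functional_extensionality; intro; unfold shift; simpl; destruct (z 0%nat); reflexivity).
  simpl. destruct (z 0%nat); simpl; f_equal. apply IH.
Qed.

Lemma prefix_odometer_inv z k : prefix (odometer_inv z) k = word_dec (prefix z k).
Proof.
  revert z; induction k as [|k IH]; intro z; auto.
  rewrite !prefix_S_cons.
  replace (shift (odometer_inv z)) with (if z 0%nat then shift z else odometer_inv (shift z))
    by (apply functional_extensionality; intro; unfold shift; simpl; destruct (z 0%nat); reflexivity).
  simpl. destruct (z 0%nat); simpl; f_equal. apply IH.
Qed.

Lemma ext_of_prefixes {A} (a b : nat -> A) : (forall k, prefix a k = prefix b k) -> a = b.
Proof.
  intro H. apply functional_extensionality. intro i. apply (proj1 (prefix_eq_agree a b (S i))); auto.
Qed.

Lemma odometer_inv_odometer z : odometer_inv (odometer z) = z.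
Proof. apply ext_of_prefixes. intro k. rewrite prefix_odometer_inv, prefix_odometer, word_dec_inc. auto. Qed.

Lemma odometer_odometer_inv z : odometer (odometer_inv z) = z.
Proof. apply ext_of_prefixes. intro k. rewrite prefix_odometer, prefix_odometer_inv, word_inc_dec. auto. Qed.

Lemma odometer_at z j : odometer z j = if all_ones (prefix z j) then negb (z j) else z j.
Proof.
  assert (H := prefix_odometer z (S j)). rewrite !prefix_S, word_inc_snoc in H.
  apply app_inj_tail in H. apply H.
Qed.

Lemma prefix_iter_odometer k z n : prefix (Nat.iter k odometer z) n = Nat.iter k word_inc (prefix z n).
Proof. induction k as [|k IH]; simpl; auto. rewrite prefix_odometer, IH. reflexivity. Qed.

Lemma odometer_aperiodic n z : (1 <= n)%nat -> Nat.iter n odometer z <> z.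
Proof.
  intros Hn E. pose proof (f_equal word_val (prefix_iter_odometer n z n)) as X.
  rewrite E, word_val_iter_inc, length_prefix in X.
  pose proof (word_val_lt (prefix z n)) as Hv. rewrite length_prefix in Hv.
  assert (Hn2 : (n < 2 ^ n)%nat) by (apply Nat.pow_gt_lin_r; lia).
  set (v := word_val (prefix z n)) in *.
  destruct (Nat.lt_ge_cases (v + n) (2 ^ n)).
  - rewrite Nat.mod_small in X by auto. lia.
  - rewrite <- (Nat.mod_unique (v + n) (2 ^ n) 1 (v + n - 2 ^ n)) in X by lia. lia.
Qed.

(** * Weights of code prefixes *)

Lemma pow2_pos k : 0 < 2 ^ k.
Proof. apply pow_lt. lra. Qed.

Lemma INR_pow2 k : INR (2 ^ k) = 2 ^ k.
Proof. rewrite pow_INR. reflexivity. Qed.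

Lemma inv_pow2_antitone j k : (j <= k)%nat -> / 2 ^ k <= / 2 ^ j.
Proof. intro H. apply Rinv_le_contravar; [apply pow2_pos|]. apply Rle_pow; auto; lra. Qed.

(* The factor [2 - flip_val s / 2^|s|] lies in (1, 2]: it keeps the weight in the band
   (2^-|s|, 2^(1-|s|)], so that extending [s] lowers it, and it makes [word_inc] lower it too. *)
Definition end_weight (s : list bool) : R := (2 - INR (flip_val s) / 2 ^ length s) / 2 ^ length s.

Lemma end_weight_gt s : / 2 ^ length s < end_weight s.
Proof.
  unfold end_weight. pose proof (pow2_pos (length s)).
  assert (INR (flip_val s) < 2 ^ length s) by (rewrite <- INR_pow2; apply lt_INR, flip_val_lt).
  assert (INR (flip_val s) / 2 ^ length s < 1).
  { apply Rmult_lt_reg_r with (2 ^ length s); auto. unfold Rdiv. rewrite Rmult_assoc, Rinv_l; lra. }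
  unfold Rdiv in *. rewrite <- (Rmult_1_l (/ 2 ^ length s)) at 1.
  apply Rmult_lt_compat_r; [apply Rinv_0_lt_compat; lra|]. lra.
Qed.

Lemma end_weight_le s : end_weight s <= 2 / 2 ^ length s.
Proof.
  unfold end_weight. pose proof (pos_INR (flip_val s)). pose proof (pow2_pos (length s)).
  assert (0 <= INR (flip_val s) / 2 ^ length s) by (apply Rdiv_le_0_compat; lra).
  unfold Rdiv at 1 3. apply Rmult_le_compat_r; [left; apply Rinv_0_lt_compat|]; lra.
Qed.

Lemma end_weight_pos s : 0 < end_weight s.
Proof.
  pose proof (end_weight_gt s). pose proof (Rinv_0_lt_compat _ (pow2_pos (length s))). lra.
Qed.

Lemma end_weight_snoc s b : end_weight (s ++ [b]) < end_weight s.
Proof.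
  pose proof (end_weight_le (s ++ [b])) as Hle. pose proof (end_weight_gt s). pose proof (pow2_pos (length s)).
  rewrite length_app, Nat.add_1_r in Hle. simpl in Hle.
  replace (2 / (2 * 2 ^ length s)) with (/ 2 ^ length s) in Hle by (field; lra). lra.
Qed.

Lemma end_weight_inc s : s <> [] -> ~ flip_maximal s -> end_weight (word_inc s) < end_weight s.
Proof.
  intros Hne Hmax. unfold end_weight. rewrite length_word_inc, flip_val_inc, S_INR by auto.
  pose proof (Rinv_0_lt_compat _ (pow2_pos (length s))).
  unfold Rdiv. apply Rmult_lt_compat_r; nra.
Qed.

Definition fix_weight (n : nat) : R := (/2) ^ n.

Lemma fix_weight_pos n : 0 < fix_weight n.
Proof. apply pow_lt. lra. Qed.

Lemma fix_weight_S n : fix_weight (S n) < fix_weight n.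
Proof. pose proof (fix_weight_pos n). unfold fix_weight in *. simpl. lra. Qed.

(* Inside the bush of rank [r] weights decay by the factor [ratio r]; as [ratio]
   decreases, deep inside a bush the next bush is lighter. *)
Definition ratio (r : Z) : R :=
  if (r <? 0)%Z then / 2 - / (4 * (1 - IZR r)) else / (IZR r + 3).

Lemma ratio_bounds r : 0 < ratio r <= /2.
Proof.
  unfold ratio. destruct (Z.ltb_spec r 0) as [H|H].
  - apply IZR_lt in H.
    assert (0 < / (4 * (1 - IZR r)) < /4) by (split; [apply Rinv_0_lt_compat|apply Rinv_lt_contravar]; nra).
    lra.
  - apply IZR_le in H. split; [apply Rinv_0_lt_compat|apply Rinv_le_contravar]; lra.
Qed.

Lemma ratio_lt1 r : 0 < ratio r < 1.
Proof. pose proof (ratio_bounds r). lra. Qed.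

Lemma ratio_succ r : ratio (r + 1) < ratio r.
Proof.
  unfold ratio. rewrite plus_IZR.
  destruct (Z.ltb_spec (r + 1) 0) as [H1|H1], (Z.ltb_spec r 0) as [H0|H0]; try lia.
  - apply IZR_lt in H0.
    assert (/ (4 * (1 - IZR r)) < / (4 * (1 - (IZR r + 1)))) by (apply Rinv_lt_contravar; nra).
    lra.
  - assert (r = -1)%Z by lia. subst r.
    replace (IZR (-1)) with (-1) by reflexivity. replace (-1 + 1 + 3) with 3 by lra.
    replace (4 * (1 - -1)) with 8 by lra. lra.
  - apply IZR_le in H0. apply Rinv_lt_contravar; nra.
Qed.

Definition tail_weight (x th : R) (L : nat) : R := x * th ^ S L.

Lemma tail_weight_pos x th L : 0 < x -> 0 < th -> 0 < tail_weight x th L.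
Proof. intros. apply Rmult_lt_0_compat; [|apply pow_lt]; auto. Qed.

Lemma tail_weight_lt x th L : 0 < x -> 0 < th < 1 -> tail_weight x th L < x.
Proof.
  intros Hx Hth. unfold tail_weight. pose proof (pow_lt_1_compat th (S L) ltac:(lra) ltac:(lia)). nra.
Qed.

Lemma tail_weight_S x th L : 0 < x -> 0 < th < 1 -> tail_weight x th (S L) < tail_weight x th L.
Proof.
  intros Hx Hth. unfold tail_weight. change (th ^ S (S L)) with (th * th ^ S L).
  pose proof (Rmult_lt_0_compat _ _ Hx (pow_lt th (S L) ltac:(lra))).
  rewrite <- Rmult_assoc, (Rmult_comm x th), Rmult_assoc. nra.
Qed.

Lemma tail_weight_le_half x th L : 0 < x -> 0 < th <= /2 -> tail_weight x th L <= x * (/2) ^ L.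
Proof.
  intros Hx Hth. unfold tail_weight. apply Rmult_le_compat_l; [lra|].
  simpl. pose proof (pow_incr th (/2) L ltac:(lra)). pose proof (pow_lt th L ltac:(lra)). nra.
Qed.

(* The words [r ++ [false]] with [|r| = m] get the ranks [1 - 2^(m+1), ..., -2^m] in
   the order of [word_inc], so the [Zb] bushes take exactly the negative ranks. *)
Definition word_rank (s : list bool) : Z := (1 - (Z.of_nat (2 ^ length s) - Z.of_nat (word_val s)))%Z.

(* Weights of the prefixes of codes: [0 s 2 u] (resp. [0 s]) has weight
   [tail_weight (end_weight s') _ |u|] (resp. [end_weight s']) with [s'] the bits of [s],
   and [1 0^n 2 u] (resp. [1 0^n]) has weight [tail_weight (fix_weight n) _ |u|]
   (resp. [fix_weight n]). *)
Fixpoint zweight (s : list bool) (l : list nat) : R :=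
  match l with
  | [] => end_weight s
  | d :: l' => if Nat.eqb d 2 then tail_weight (end_weight s) (ratio (word_rank s)) (length l')
               else zweight (s ++ [Nat.eqb d 1]) l'
  end.
Fixpoint pweight (n : nat) (l : list nat) : R :=
  match l with
  | [] => fix_weight n
  | d :: l' => if Nat.eqb d 0 then pweight (S n) l'
               else tail_weight (fix_weight n) (ratio (Z.of_nat n)) (length l')
  end.
Definition weight (l : list nat) : R :=
  match l with [] => 4 | d :: l' => if Nat.eqb d 0 then zweight [] l' else pweight 0 l' end.

Lemma zweight_pos s l : 0 < zweight s l.
Proof.
  revert s; induction l as [|d l IH]; intro s; simpl; [apply end_weight_pos|].
  destruct (Nat.eqb d 2); auto. apply tail_weight_pos; [apply end_weight_pos|apply ratio_lt1].
Qed.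

Lemma pweight_pos n l : 0 < pweight n l.
Proof.
  revert n; induction l as [|d l IH]; intro n; simpl; [apply fix_weight_pos|].
  destruct (Nat.eqb d 0); auto. apply tail_weight_pos; [apply fix_weight_pos|apply ratio_lt1].
Qed.

Lemma weight_pos l : 0 < weight l.
Proof. destruct l as [|d l]; simpl; [lra|]. destruct (Nat.eqb d 0); [apply zweight_pos|apply pweight_pos]. Qed.

Lemma zweight_snoc s l c : zweight s (l ++ [c]) <= zweight s l.
Proof.
  revert s; induction l as [|d l IH]; intro s; simpl.
  - left. destruct (Nat.eqb c 2); [apply tail_weight_lt|apply end_weight_snoc];
      auto using end_weight_pos, ratio_lt1.
  - destruct (Nat.eqb d 2); auto.
    rewrite length_app, Nat.add_1_r. left. apply tail_weight_S; auto using end_weight_pos, ratio_lt1.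
Qed.

Lemma pweight_snoc n l c : pweight n (l ++ [c]) <= pweight n l.
Proof.
  revert n; induction l as [|d l IH]; intro n; simpl.
  - left. destruct (Nat.eqb c 0); [apply fix_weight_S|apply tail_weight_lt]; auto using fix_weight_pos, ratio_lt1.
  - destruct (Nat.eqb d 0); auto.
    rewrite length_app, Nat.add_1_r. left. apply tail_weight_S; auto using fix_weight_pos, ratio_lt1.
Qed.

Lemma weight_snoc l c : weight (l ++ [c]) <= weight l.
Proof.
  destruct l as [|d l]; simpl.
  - destruct (Nat.eqb c 0); simpl; unfold end_weight, fix_weight; simpl; lra.
  - destruct (Nat.eqb d 0); [apply zweight_snoc|apply pweight_snoc].
Qed.

Lemma zweight_bits s w l : zweight s (map b2n w ++ l) = zweight (s ++ w) l.
Proof.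
  revert s; induction w as [|c w IH]; intro s; simpl; [rewrite app_nil_r; auto|].
  destruct c; simpl; rewrite IH, <- app_assoc; auto.
Qed.

Lemma pweight_zeros n k l : pweight n (repeat 0%nat k ++ l) = pweight (n + k) l.
Proof.
  revert n; induction k as [|k IH]; intro n; simpl; [rewrite Nat.add_0_r; auto|].
  rewrite IH. f_equal. lia.
Qed.

(** * Points, their codes, and the symbolic map *)

(* [Zend z] is a point of the odometer, [Bush b t] the point [t] of the Cantor set
   indexed by [b], and [Pfix] the fixed point. The indices are ordered like Z by
   [index_succ]: [Zb r] (r a binary word) precede [Pb 0], [Pb 1], ..., and words of
   equal length are enumerated by [word_inc], longer words coming earlier. *)
Inductive bush_index := Zb (r : list bool) | Pb (n : nat).
Inductive point := Zend (z : nat -> bool) | Bush (b : bush_index) (t : nat -> bool) | Pfix.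

Definition bush_header (b : bush_index) : list nat :=
  match b with
  | Zb r => 0%nat :: (map b2n r ++ [0%nat; 2%nat])
  | Pb n => 1%nat :: (repeat 0%nat n ++ [2%nat])
  end.
Definition bits (t : nat -> bool) : nat -> nat := fun i => b2n (t i).

Lemma digits3_bits t : digits3 (bits t).
Proof. intro k. pose proof (b2n_le (t k)). unfold bits. lia. Qed.

Definition code (x : point) : nat -> nat :=
  match x with
  | Zend z => prepend [0%nat] (bits z)
  | Bush b t => prepend (bush_header b) (bits t)
  | Pfix => prepend [1%nat] (fun _ => 0%nat)
  end.

Definition index_succ (b : bush_index) : bush_index :=
  match b with
  | Zb r => if all_ones r then match r with [] => Pb 0 | _ :: r' => Zb (repeat false (length r')) end
            else Zb (word_inc r)
  | Pb n => Pb (S n)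
  end.
Definition index_pred (b : bush_index) : bush_index :=
  match b with
  | Zb r => if all_zeros r then Zb (repeat true (S (length r))) else Zb (word_dec r)
  | Pb 0 => Zb []
  | Pb (S n) => Pb n
  end.
Definition step (x : point) : point :=
  match x with Zend z => Zend (odometer z) | Bush b t => Bush (index_succ b) t | Pfix => Pfix end.
Definition step_inv (x : point) : point :=
  match x with Zend z => Zend (odometer_inv z) | Bush b t => Bush (index_pred b) t | Pfix => Pfix end.

Lemma index_pred_succ b : index_pred (index_succ b) = b.
Proof.
  destruct b as [r|n]; simpl; auto. destruct (all_ones r) eqn:E.
  - destruct r as [|c r']; simpl; auto.
    rewrite all_zeros_zeros, repeat_length. apply all_ones_repeat in E. rewrite E. reflexivity.
  - simpl. rewrite all_zeros_inc, E, word_dec_inc. reflexivity.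
Qed.

Lemma index_succ_pred b : index_succ (index_pred b) = b.
Proof.
  destruct b as [r|[|n]]; simpl; auto. destruct (all_zeros r) eqn:E.
  - simpl. rewrite all_ones_ones, repeat_length. apply all_zeros_repeat in E. rewrite E, repeat_length.
    reflexivity.
  - simpl. rewrite all_ones_dec, E, word_inc_dec. reflexivity.
Qed.

Lemma step_inv_step x : step_inv (step x) = x.
Proof. destruct x; simpl; rewrite ?odometer_inv_odometer, ?index_pred_succ; auto. Qed.

Lemma step_step_inv x : step (step_inv x) = x.
Proof. destruct x; simpl; rewrite ?odometer_odometer_inv, ?index_succ_pred; auto. Qed.

Lemma code_Zend_S z j : code (Zend z) (S j) = b2n (z j).
Proof. simpl. rewrite prepend_cons, prepend_nil. reflexivity. Qed.

Lemma code_Pfix_S j : code Pfix (S j) = 0%nat.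
Proof. simpl. rewrite prepend_cons, prepend_nil. reflexivity. Qed.

Lemma code_Zb r t i : code (Bush (Zb r) t) i =
  match i with
  | 0%nat => 0%nat
  | S j => if (j <? length r)%nat then b2n (nth j r false)
           else if (j =? length r)%nat then 0%nat
           else if (j =? S (length r))%nat then 2%nat
           else b2n (t (j - S (S (length r))))%nat
  end.
Proof.
  simpl. rewrite prepend_cons. destruct i as [|i]; auto.
  rewrite prepend_app. unfold prepend at 1. rewrite length_map.
  destruct (Nat.ltb_spec i (length r)).
  - rewrite nth_indep with (d' := b2n false) by (rewrite length_map; auto). apply map_nth.
  - rewrite !prepend_cons. destruct (Nat.eqb_spec i (length r)) as [->|]; [rewrite Nat.sub_diag; auto|].
    destruct (i - length r)%nat as [|[|k]] eqn:E; [lia| |].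
    + rewrite (proj2 (Nat.eqb_eq _ _)) by lia. reflexivity.
    + rewrite (proj2 (Nat.eqb_neq _ _)) by lia. rewrite prepend_cons, prepend_nil. unfold bits.
      do 2 f_equal. lia.
Qed.

Lemma code_Pb n t i : code (Bush (Pb n) t) i =
  match i with
  | 0%nat => 1%nat
  | S j => if (j <? n)%nat then 0%nat else if (j =? n)%nat then 2%nat else b2n (t (j - S n))%nat
  end.
Proof.
  simpl. rewrite prepend_cons. destruct i as [|i]; auto.
  rewrite prepend_app. unfold prepend at 1. rewrite repeat_length.
  destruct (Nat.ltb_spec i n); [apply nth_repeat|].
  rewrite prepend_cons. destruct (Nat.eqb_spec i n) as [->|]; [rewrite Nat.sub_diag; auto|].
  destruct (i - n)%nat eqn:E; [lia|]. rewrite prepend_nil. unfold bits. do 2 f_equal. lia.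
Qed.

Lemma In_map_b2n r y : In y (map b2n r) -> (y <= 1)%nat.
Proof. intro Hy. apply in_map_iff in Hy. destruct Hy as [b [<- _]]. apply b2n_le. Qed.

Lemma code_digits3 x : digits3 (code x).
Proof.
  destruct x as [z|[r|n] t|]; apply digits3_prepend; try apply digits3_bits.
  - intros y [<-|[]]. lia.
  - intros y [<-|Hy]; [lia|]. apply in_app_iff in Hy.
    destruct Hy as [Hy|[<-|[<-|[]]]]; [apply In_map_b2n in Hy|..]; lia.
  - intros y [<-|Hy]; [lia|]. apply in_app_iff in Hy.
    destruct Hy as [Hy|[<-|[]]]; [apply repeat_spec in Hy|]; lia.
  - intros y [<-|[]]. lia.
  - intro k. lia.
Qed.

Lemma length_bush_header b :
  length (bush_header b) = match b with Zb r => (length r + 3)%nat | Pb n => (n + 2)%nat end.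
Proof.
  destruct b; simpl; rewrite length_app; simpl; [rewrite length_map|rewrite repeat_length]; lia.
Qed.

Lemma code_Bush_tail b t L : code (Bush b t) (length (bush_header b) + L) = bits t L.
Proof. simpl. rewrite prepend_ge by lia. f_equal. lia. Qed.

Ltac case_index H := repeat (match type of H with
  | context [Nat.ltb ?a ?b] => destruct (Nat.ltb_spec a b)
  | context [Nat.eqb ?a ?b] => destruct (Nat.eqb_spec a b) end); try lia.
Ltac digit_mismatch := match goal with
  | H : b2n ?x = 2%nat |- _ => destruct x; discriminate
  | H : 2%nat = b2n ?x |- _ => destruct x; discriminate
  | H : 0%nat = 2%nat |- _ => discriminate
  | H : 2%nat = 0%nat |- _ => discriminate
  end.

Lemma header_determines_bush b t y :
  agree (code y) (code (Bush b t)) (length (bush_header b)) -> exists t', y = Bush b t'.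
Proof.
  intro H. rewrite length_bush_header in H. destruct b as [r|n].
  - assert (H0 := H 0%nat ltac:(lia)). assert (H2 := H (S (S (length r))) ltac:(lia)).
    rewrite (code_Zb r) in H0, H2. case_index H2.
    destruct y as [z|[r'|n'] t'|]; try discriminate.
    + rewrite code_Zend_S in H2. digit_mismatch.
    + exists t'. do 2 f_equal.
      assert (Hl : length r' = length r).
      { destruct (Nat.lt_trichotomy (length r') (length r)) as [L|[L|L]]; auto; exfalso.
        - assert (X := H (S (S (length r'))) ltac:(lia)). rewrite !code_Zb in X. case_index X; digit_mismatch.
        - rewrite code_Zb in H2. case_index H2; digit_mismatch. }
      apply nth_ext with false false; auto. intros j Hj. rewrite Hl in Hj.
      assert (X := H (S j) ltac:(lia)). rewrite !code_Zb in X. case_index X. apply b2n_inj; auto.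
  - assert (H0 := H 0%nat ltac:(lia)). assert (H2 := H (S n) ltac:(lia)).
    rewrite (code_Pb n) in H0, H2. case_index H2.
    destruct y as [z|[r'|n'] t'|]; try discriminate.
    + exists t'. do 2 f_equal. rewrite code_Pb in H2.
      destruct (Nat.lt_trichotomy n' n) as [L|[L|L]]; auto; exfalso.
      * assert (X := H (S n') ltac:(lia)). rewrite !code_Pb in X. case_index X; digit_mismatch.
      * case_index H2; digit_mismatch.
Qed.

Lemma code_inj x y : (forall i, code x i = code y i) -> x = y.
Proof.
  intro H. destruct y as [z|b t|].
  - destruct x as [z'|[r|n] t|]; try (specialize (H 0%nat); discriminate).
    + f_equal. apply functional_extensionality. intro j. specialize (H (S j)).
      rewrite !code_Zend_S in H. apply b2n_inj; auto.
    + exfalso. specialize (H (S (S (length r)))). rewrite code_Zb, code_Zend_S in H.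
      rewrite (proj2 (Nat.ltb_ge _ _)), (proj2 (Nat.eqb_neq _ _)), Nat.eqb_refl in H by lia.
      pose proof (b2n_le (z (S (length r)))). lia.
  - destruct (header_determines_bush b t x) as [t' ->]; [intros i _; auto|].
    f_equal. apply functional_extensionality. intro j. specialize (H (length (bush_header b) + j)%nat).
    rewrite !code_Bush_tail in H. apply b2n_inj; auto.
  - destruct x as [z|[r|n] t|]; auto; exfalso; try (specialize (H 0%nat); discriminate).
    specialize (H (S n)). rewrite code_Pb, code_Pfix_S, Nat.ltb_irrefl, Nat.eqb_refl in H. discriminate.
Qed.

Definition embed (x : point) : R * R := (expand5 (code x), 0).
Definition Wcantor (q : R * R) : Prop := exists x, q = embed x.

Lemma euclid_on_axis a b : euclid (a, 0) (b, 0) = Rabs (a - b).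
Proof.
  unfold euclid. simpl fst; simpl snd.
  replace ((a - b) ^ 2 + (0 - 0) ^ 2) with (Rsqr (a - b)) by (unfold Rsqr; ring).
  apply sqrt_Rsqr_abs.
Qed.

Lemma euclid_embed x y : euclid (embed x) (embed y) = Rabs (expand5 (code x) - expand5 (code y)).
Proof. apply euclid_on_axis. Qed.

Lemma euclid_embed_le x y n : agree (code x) (code y) n -> euclid (embed x) (embed y) <= /2 * (/5) ^ n.
Proof. intro H. rewrite euclid_embed. apply expand5_close; auto using code_digits3. Qed.

Lemma agree_of_euclid_lt x y n : euclid (embed x) (embed y) < /10 * (/5) ^ n -> agree (code x) (code y) n.
Proof.
  intro H. rewrite euclid_embed in H. apply NNPP. intro X.
  pose proof (expand5_apart n _ _ (code_digits3 x) (code_digits3 y) X). lra.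
Qed.

Lemma embed_inj x y : embed x = embed y -> x = y.
Proof.
  intro H. apply code_inj. intro i. apply (agree_of_euclid_lt x y (S i)); [|lia].
  rewrite H, euclid_embed, Rminus_diag, Rabs_R0. pose proof (pow_inv5_pos (S i)). lra.
Qed.

Definition point_of (q : R * R) : point := epsilon (inhabits Pfix) (fun x => embed x = q).

Lemma point_of_embed x : point_of (embed x) = x.
Proof. apply embed_inj. apply (epsilon_spec (inhabits Pfix) (fun y => embed y = embed x)). eauto. Qed.

Lemma geom_small c q e : 0 < c -> 0 <= q < 1 -> 0 < e -> exists N, forall n, (N <= n)%nat -> c * q ^ n < e.
Proof.
  intros Hc Hq He.
  destruct (pow_lt_1_zero q ltac:(rewrite Rabs_pos_eq; lra) (e / c) ltac:(apply Rdiv_lt_0_compat; lra)) as [N HN].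
  exists N. intros n Hn. specialize (HN n Hn). rewrite Rabs_pos_eq in HN by (apply pow_le; lra).
  apply Rmult_lt_reg_l with (/ c); [apply Rinv_0_lt_compat; lra|].
  rewrite <- Rmult_assoc, Rinv_l, Rmult_1_l by lra. rewrite Rmult_comm. exact HN.
Qed.

Lemma embed_close x e : 0 < e -> exists n, forall y, agree (code x) (code y) n -> euclid (embed x) (embed y) < e.
Proof.
  intro He. destruct (geom_small (/2) (/5) e ltac:(lra) ltac:(lra) He) as [n Hn]. specialize (Hn n (le_n n)).
  exists n. intros y Hy. pose proof (euclid_embed_le x y n Hy). lra.
Qed.

Definition prefix_continuous (f : point -> point) : Prop :=
  forall x N, exists M, forall y, agree (code x) (code y) M -> agree (code (f x)) (code (f y)) N.

Lemma continuous_of_prefix_continuous f :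
  prefix_continuous f -> continuous_on Wcantor euclid (fun q => embed (f (point_of q))).
Proof.
  intros Hf q [x ->] e He. destruct (embed_close (f x) e He) as [N HN].
  destruct (Hf x N) as [M HM]. exists (/10 * (/5) ^ M). split; [pose proof (pow_inv5_pos M); lra|].
  intros q' [y ->] Hd. rewrite !point_of_embed. apply HN, HM, agree_of_euclid_lt, Hd.
Qed.

Lemma ropen_prefix_local A N (P : (nat -> nat) -> Prop) :
  (forall q, A q -> Wcantor q) -> (forall a b, agree a b N -> P a -> P b) ->
  ropen A euclid (fun q => A q /\ P (code (point_of q))).
Proof.
  intros HA HP. split; [intros q [Aq _]; auto|].
  intros q [Aq Pq]. exists (/10 * (/5) ^ N). split; [pose proof (pow_inv5_pos N); lra|].
  intros q' Aq' Hd. split; auto.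
  destruct (HA q Aq) as [x ->], (HA q' Aq') as [y ->]. rewrite point_of_embed in *.
  apply (HP (code x)); auto. apply agree_of_euclid_lt, Hd.
Qed.

(** * W is a Cantor set *)

Lemma existsb_seq_false (f : nat -> bool) i :
  (forall j, (j < i)%nat -> f j = false) -> existsb f (seq 0 i) = false.
Proof.
  intro H. apply Bool.not_true_iff_false. rewrite existsb_exists. intros [j [Hj E]].
  apply in_seq in Hj. rewrite H in E by lia. discriminate.
Qed.

Lemma existsb_seq_true (f : nat -> bool) i j : (j < i)%nat -> f j = true -> existsb f (seq 0 i) = true.
Proof. intros Hj E. apply existsb_exists. exists j. rewrite in_seq. split; auto; lia. Qed.

Lemma existsb_seq_agree (f g : nat -> bool) i : agree f g i -> existsb f (seq 0 i) = existsb g (seq 0 i).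
Proof.
  induction i as [|i IH]; intro H; auto.
  rewrite !seq_S, !existsb_app, IH by (intros j Hj; apply H; lia). simpl. rewrite H by lia. reflexivity.
Qed.

Definition has_two (u : nat -> nat) (i : nat) : bool := existsb (fun j => Nat.eqb (u j) 2) (seq 0 i).
Definition has_nonzero (u : nat -> nat) (i : nat) : bool := existsb (fun j => negb (Nat.eqb (u j) 0)) (seq 0 i).

Lemma has_two_false u i : (forall j, (j < i)%nat -> u j <> 2%nat) -> has_two u i = false.
Proof. intro H. apply existsb_seq_false. intros j Hj. apply Nat.eqb_neq, H, Hj. Qed.

Lemma has_two_true u i j : (j < i)%nat -> u j = 2%nat -> has_two u i = true.
Proof. intros Hj E. apply existsb_seq_true with j; auto. apply Nat.eqb_eq, E. Qed.

Lemma has_nonzero_false u i : (forall j, (j < i)%nat -> u j = 0%nat) -> has_nonzero u i = false.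
Proof. intro H. apply existsb_seq_false. intros j Hj. rewrite H; auto. Qed.

Lemma has_nonzero_true u i j : (j < i)%nat -> u j <> 0%nat -> has_nonzero u i = true.
Proof. intros Hj E. apply existsb_seq_true with j; auto. rewrite (proj2 (Nat.eqb_neq _ _) E). reflexivity. Qed.

Definition bit (k : nat) : nat := b2n (negb (Nat.eqb k 0)).

(* A retraction of {0,1,2}^N onto the codes: after a leading 0 or 1, the first 2 is
   replaced by the end [0 2] of a [Zb] header; after a leading 2, the first nonzero
   digit becomes the 2 ending a [Pb] header. All other digits are read as bits. *)
Definition retract_Z (u : nat -> nat) (i : nat) : nat :=
  if has_two u i then
    match i with
    | 0%nat => 0%nat
    | S i' => if andb (Nat.eqb (u i') 2) (negb (has_two u i')) then 2%nat else bit (u i')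
    end
  else if Nat.eqb (u i) 2 then 0%nat else bit (u i).
Definition retract_P (u : nat -> nat) (i : nat) : nat :=
  if Nat.eqb (u i) 0 then 0%nat else if has_nonzero u i then 1%nat else 2%nat.
Definition retract (e : nat -> nat) : nat -> nat :=
  if Nat.eqb (e 0%nat) 2 then prepend [1%nat] (retract_P (shift e)) else prepend [0%nat] (retract_Z (shift e)).

Lemma retract_agree e e' N : agree e e' N -> agree (retract e) (retract e') N.
Proof.
  intros H i Hi. assert (H0 : e 0%nat = e' 0%nat) by (apply H; lia).
  unfold retract. rewrite H0. destruct i as [|i]; [destruct (Nat.eqb (e' 0%nat) 2); reflexivity|].
  assert (Hs : agree (shift e) (shift e') (S i)) by (intros j Hj; apply H; lia).
  destruct (Nat.eqb (e' 0%nat) 2); rewrite !prepend_cons, !prepend_nil.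
  - unfold retract_P, has_nonzero. rewrite Hs by lia.
    rewrite (existsb_seq_agree _ (fun j => negb (Nat.eqb (shift e' j) 0)))
      by (intros j Hj; rewrite Hs; auto; lia).
    reflexivity.
  - unfold retract_Z, has_two.
    rewrite (existsb_seq_agree _ (fun j => Nat.eqb (shift e' j) 2) i) by (intros j Hj; rewrite Hs; auto; lia).
    destruct i as [|i]; [rewrite !Hs by lia; reflexivity|].
    rewrite (existsb_seq_agree _ (fun j => Nat.eqb (shift e' j) 2) i) by (intros j Hj; rewrite Hs; auto; lia).
    rewrite !Hs by lia. reflexivity.
Qed.

Lemma retract_P_code u : exists x, forall i, code x i = prepend [1%nat] (retract_P u) i.
Proof.
  destruct (classic (exists n, u n <> 0%nat)) as [Hx|Hx].
  - destruct (least_witness _ Hx) as [n [Hn Hlt]].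
    assert (Hz : forall j, (j < n)%nat -> u j = 0%nat) by (intros j Hj; apply NNPP, Hlt, Hj).
    exists (Bush (Pb n) (fun i => negb (Nat.eqb (u (S n + i)%nat) 0))). intros [|i]; auto.
    rewrite code_Pb, prepend_cons, prepend_nil. unfold retract_P.
    destruct (Nat.ltb_spec i n); [rewrite Hz; auto|].
    destruct (Nat.eqb_spec i n) as [->|].
    + rewrite (proj2 (Nat.eqb_neq _ _) Hn), has_nonzero_false; auto.
    + replace (S n + (i - S n))%nat with i by lia.
      destruct (Nat.eqb_spec (u i) 0); [reflexivity|].
      rewrite (has_nonzero_true u i n) by (auto; lia). reflexivity.
  - exists Pfix. intros [|i]; auto. rewrite code_Pfix_S, prepend_cons, prepend_nil. unfold retract_P.
    assert (u i = 0%nat) as -> by (apply NNPP; intro; apply Hx; eauto). reflexivity.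
Qed.

Lemma retract_Z_code u : exists x, forall i, code x i = prepend [0%nat] (retract_Z u) i.
Proof.
  destruct (classic (exists n, u n = 2%nat)) as [Hx|Hx].
  - destruct (least_witness _ Hx) as [j [Hj Hlt]].
    assert (Hno : forall k, (k < j)%nat -> u k <> 2%nat) by (intros k Hk; apply Hlt, Hk).
    exists (Bush (Zb (prefix (fun i => negb (Nat.eqb (u i) 0)) j)) (fun i => negb (Nat.eqb (u (S j + i)%nat) 0))).
    intros [|i]; auto. rewrite code_Zb, prepend_cons, prepend_nil, length_prefix. unfold retract_Z.
    destruct (Nat.ltb_spec i j).
    + rewrite nth_prefix, has_two_false, (proj2 (Nat.eqb_neq (u i) 2)) by (auto; intros; apply Hno; lia).
      reflexivity.
    + destruct (Nat.eqb_spec i j) as [->|]; [rewrite has_two_false, Hj; auto|].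
      rewrite (has_two_true u i j) by (auto; lia). destruct i as [|i]; [lia|].
      destruct (Nat.eqb_spec i j) as [->|].
      * rewrite Hj, has_two_false by auto. simpl. rewrite Nat.eqb_refl. reflexivity.
      * rewrite (proj2 (Nat.eqb_neq (S i) (S j))), (has_two_true u i j), Bool.andb_false_r by (auto; lia).
        unfold bit. do 4 f_equal. lia.
  - exists (Zend (fun i => negb (Nat.eqb (u i) 0))). intros [|i]; auto.
    rewrite code_Zend_S, prepend_cons, prepend_nil. unfold retract_Z.
    rewrite has_two_false, (proj2 (Nat.eqb_neq (u i) 2)) by (intros; intro; apply Hx; eauto). reflexivity.
Qed.

Lemma retract_code e : exists x, forall i, code x i = retract e i.
Proof.
  unfold retract. destruct (Nat.eqb (e 0%nat) 2); [apply retract_P_code|apply retract_Z_code].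
Qed.

Lemma bit_b2n b : bit (b2n b) = b2n b.
Proof. destruct b; reflexivity. Qed.

Lemma retract_head_Z d l f :
  d <> 2%nat -> retract (prepend (d :: l) f) = prepend [0%nat] (retract_Z (prepend l f)).
Proof.
  intro Hd. unfold retract. rewrite shift_prepend_cons, prepend_cons.
  rewrite (proj2 (Nat.eqb_neq _ _) Hd). reflexivity.
Qed.

Lemma retract_head_P l f : retract (prepend (2%nat :: l) f) = prepend [1%nat] (retract_P (prepend l f)).
Proof. unfold retract. rewrite shift_prepend_cons, prepend_cons. reflexivity. Qed.

Lemma retract_Zend z i : retract (prepend [0%nat] (bits z)) i = code (Zend z) i.
Proof.
  rewrite retract_head_Z, prepend_nil by discriminate. destruct i as [|i]; auto.
  rewrite code_Zend_S, prepend_cons, prepend_nil. unfold retract_Z, bits.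
  rewrite has_two_false by (intros j _; destruct (z j); discriminate). destruct (z i); reflexivity.
Qed.

Lemma retract_Zb r t i : retract (prepend (0%nat :: map b2n r ++ [2%nat]) (bits t)) i = code (Bush (Zb r) t) i.
Proof.
  rewrite retract_head_Z by discriminate. destruct i as [|i]; auto.
  rewrite code_Zb, prepend_cons, prepend_nil. set (u := prepend (map b2n r ++ [2%nat]) (bits t)).
  assert (Hlen : length (map b2n r ++ [2%nat]) = S (length r)) by (rewrite length_app, length_map; simpl; lia).
  assert (Hr : forall j, (j < length r)%nat -> u j = b2n (nth j r false)).
  { intros j Hj. unfold u. rewrite prepend_lt, app_nth1 by (rewrite ?Hlen, ?length_map; lia).
    rewrite nth_indep with (d' := b2n false) by (rewrite length_map; auto). apply map_nth. }
  assert (H2 : u (length r) = 2%nat).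
  { unfold u. rewrite prepend_lt, app_nth2 by (rewrite ?Hlen, ?length_map; lia).
    rewrite length_map, Nat.sub_diag. reflexivity. }
  assert (Ht : forall j, (S (length r) <= j)%nat -> u j = bits t (j - S (length r))).
  { intros j Hj. unfold u. rewrite prepend_ge, Hlen by lia. reflexivity. }
  assert (Hno : forall j, (j < length r)%nat -> u j <> 2%nat).
  { intros j Hj. rewrite Hr by auto. destruct (nth j r false); discriminate. }
  unfold retract_Z. destruct (Nat.ltb_spec i (length r)).
  - rewrite has_two_false by (intros; apply Hno; lia). rewrite Hr by auto.
    destruct (nth i r false); reflexivity.
  - destruct (Nat.eqb_spec i (length r)) as [->|]; [rewrite has_two_false, H2; auto|].
    rewrite (has_two_true u i (length r)) by (auto; lia). destruct i as [|i]; [lia|].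
    destruct (Nat.eqb_spec i (length r)) as [->|].
    + rewrite H2, has_two_false, !Nat.eqb_refl by auto. reflexivity.
    + rewrite (proj2 (Nat.eqb_neq (S i) _)), (has_two_true u i (length r)), Bool.andb_false_r by (auto; lia).
      rewrite Ht by lia. unfold bits. rewrite bit_b2n. reflexivity.
Qed.

Lemma retract_Pb n t i :
  retract (prepend (2%nat :: repeat 0%nat n ++ [1%nat]) (bits t)) i = code (Bush (Pb n) t) i.
Proof.
  rewrite retract_head_P. destruct i as [|i]; auto.
  rewrite code_Pb, prepend_cons, prepend_nil. set (u := prepend (repeat 0%nat n ++ [1%nat]) (bits t)).
  assert (Hlen : length (repeat 0%nat n ++ [1%nat]) = S n) by (rewrite length_app, repeat_length; simpl; lia).
  assert (H0 : forall j, (j < n)%nat -> u j = 0%nat).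
  { intros j Hj. unfold u. rewrite prepend_lt, app_nth1 by (rewrite ?Hlen, ?repeat_length; lia).
    apply nth_repeat. }
  assert (H1 : u n = 1%nat).
  { unfold u. rewrite prepend_lt, app_nth2 by (rewrite ?Hlen, ?repeat_length; lia).
    rewrite repeat_length, Nat.sub_diag. reflexivity. }
  unfold retract_P. destruct (Nat.ltb_spec i n); [rewrite H0; auto|].
  destruct (Nat.eqb_spec i n) as [->|]; [rewrite H1, has_nonzero_false; auto|].
  rewrite (has_nonzero_true u i n) by (try rewrite H1; lia).
  unfold u. rewrite prepend_ge, Hlen by lia. unfold bits. destruct (t (i - S n)%nat); reflexivity.
Qed.

Lemma retract_Pfix i : retract (prepend [2%nat] (fun _ => 0%nat)) i = code Pfix i.
Proof.
  rewrite retract_head_P, prepend_nil. destruct i; reflexivity.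
Qed.

Lemma code_retract x : exists e, digits3 e /\ forall i, code x i = retract e i.
Proof.
  destruct x as [z|[r|n] t|].
  - exists (prepend [0%nat] (bits z)). split; [|intro; symmetry; apply retract_Zend].
    apply digits3_prepend; [intros y [<-|[]]; lia|apply digits3_bits].
  - exists (prepend (0%nat :: map b2n r ++ [2%nat]) (bits t)). split; [|intro; symmetry; apply retract_Zb].
    apply digits3_prepend; [|apply digits3_bits]. intros y [<-|Hy]; [lia|]. apply in_app_iff in Hy.
    destruct Hy as [Hy|[<-|[]]]; [apply In_map_b2n in Hy|]; lia.
  - exists (prepend (2%nat :: repeat 0%nat n ++ [1%nat]) (bits t)). split; [|intro; symmetry; apply retract_Pb].
    apply digits3_prepend; [|apply digits3_bits]. intros y [<-|Hy]; [lia|]. apply in_app_iff in Hy.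
    destruct Hy as [Hy|[<-|[]]]; [apply repeat_spec in Hy|]; lia.
  - exists (prepend [2%nat] (fun _ => 0%nat)). split; [|intro; symmetry; apply retract_Pfix].
    apply digits3_prepend; [intros y [<-|[]]|intro]; lia.
Qed.

Fixpoint branch (choose : list nat -> nat) (n : nat) : list nat :=
  match n with 0%nat => [] | S m => branch choose m ++ [choose (branch choose m)] end.

Lemma length_branch choose n : length (branch choose n) = n.
Proof. induction n as [|n IH]; simpl; auto. rewrite length_app, IH. simpl. lia. Qed.

Lemma nth_branch choose n m i : (i < n)%nat -> (n <= m)%nat ->
  nth i (branch choose m) 0%nat = nth i (branch choose n) 0%nat.
Proof.
  intros Hi Hnm. induction Hnm as [|m Hnm IH]; auto.
  simpl. rewrite app_nth1 by (rewrite length_branch; lia). exact IH.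
Qed.

Lemma ternary_koenig (P : list nat -> Prop) :
  (forall l, P (l ++ [0%nat]) -> P (l ++ [1%nat]) -> P (l ++ [2%nat]) -> P l) ->
  ~ P [] -> exists e, digits3 e /\ forall n, ~ P (prefix e n).
Proof.
  intros Hsplit Hnil.
  set (choose := fun l => if excluded_middle_informative (P (l ++ [0%nat])) then
                            if excluded_middle_informative (P (l ++ [1%nat])) then 2%nat else 1%nat
                          else 0%nat).
  assert (Hchoose : forall l, ~ P l -> ~ P (l ++ [choose l])).
  { intros l Hl. unfold choose.
    destruct excluded_middle_informative; [destruct excluded_middle_informative|]; auto. }
  set (e := fun i => nth i (branch choose (S i)) 0%nat).
  assert (He : forall n, prefix e n = branch choose n).
  { intro n. apply nth_ext with 0%nat 0%nat; rewrite length_prefix, ?length_branch; auto.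
    intros i Hi. rewrite nth_prefix by auto. symmetry. apply nth_branch; lia. }
  exists e. split.
  - intro i. unfold e. simpl. rewrite app_nth2, length_branch, Nat.sub_diag by (rewrite length_branch; lia).
    simpl. unfold choose. destruct excluded_middle_informative; [destruct excluded_middle_informative|]; lia.
  - intro n. rewrite He. induction n as [|n IH]; auto. simpl. apply Hchoose, IH.
Qed.

Definition finitely_covered {I} (U : I -> R * R -> Prop) (l : list nat) : Prop :=
  exists L : list I, forall e, digits3 e -> prefix e (length l) = l ->
    exists i, In i L /\ U i (expand5 (retract e), 0).

Lemma finitely_covered_split {I} (U : I -> R * R -> Prop) l :
  finitely_covered U (l ++ [0%nat]) -> finitely_covered U (l ++ [1%nat]) ->
  finitely_covered U (l ++ [2%nat]) -> finitely_covered U l.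
Proof.
  intros [L0 H0] [L1 H1] [L2 H2]. exists (L0 ++ L1 ++ L2). intros e He Hl.
  assert (Hext : prefix e (length (l ++ [e (length l)])) = l ++ [e (length l)]).
  { rewrite length_app, Nat.add_1_r, prefix_S, Hl. reflexivity. }
  assert (Hd : e (length l) = 0%nat \/ e (length l) = 1%nat \/ e (length l) = 2%nat)
    by (pose proof (He (length l)); lia).
  destruct Hd as [E|[E|E]]; rewrite E in Hext.
  - destruct (H0 e He Hext) as [i [Hi Ui]]. exists i. rewrite !in_app_iff. auto.
  - destruct (H1 e He Hext) as [i [Hi Ui]]. exists i. rewrite !in_app_iff. auto.
  - destruct (H2 e He Hext) as [i [Hi Ui]]. exists i. rewrite !in_app_iff. auto.
Qed.

Lemma embed_retract e : exists x, (expand5 (retract e), 0) = embed x /\ forall i, code x i = retract e i.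
Proof.
  destruct (retract_code e) as [x Hx]. exists x. split; auto.
  unfold embed. f_equal. apply expand5_ext. intro i. symmetry. apply Hx.
Qed.

Lemma compact_Wcantor : compact_in Wcantor euclid.
Proof.
  intros I U Hopen Hcov.
  destruct (classic (finitely_covered U [])) as [[L HL]|Hnot].
  - exists L. intros q [x ->]. destruct (code_retract x) as [e [He Hx]].
    destruct (HL e He eq_refl) as [i [Hi Ui]]. exists i. split; auto.
    replace (embed x) with (expand5 (retract e), 0); auto. unfold embed. f_equal. apply expand5_ext. auto.
  - exfalso. destruct (ternary_koenig _ (finitely_covered_split U) Hnot) as [e [He Hnone]].
    destruct (embed_retract e) as [x [Ex Hx]].
    destruct (Hcov (embed x) (ex_intro _ x eq_refl)) as [i Ui].
    destruct (proj2 (Hopen i) _ Ui) as [eps [Heps Hball]].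
    destruct (embed_close x eps Heps) as [n Hn].
    apply (Hnone n). exists [i]. intros e' He' Hpre. exists i. split; [left; auto|].
    destruct (embed_retract e') as [x' [Ex' Hx']]. rewrite Ex'. apply Hball; [exists x'; auto|].
    apply Hn. intros j Hj. rewrite Hx, Hx'. apply retract_agree with n; auto.
    apply prefix_eq_agree. rewrite length_prefix in Hpre. rewrite Hpre. reflexivity.
Qed.

Lemma code_differ x y : x <> y -> exists n, code x n <> code y n.
Proof. intro H. apply NNPP. intro H'. apply H, code_inj. intro i. apply NNPP. intro X. apply H'. eauto. Qed.

Lemma totally_disconnected_Wcantor : totally_disconnected Wcantor euclid.
Proof.
  intros A HA Hconn q q' Aq Aq'. apply NNPP. intro Hne.
  destruct (HA q Aq) as [x ->], (HA q' Aq') as [y ->].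
  assert (Hxy : x <> y) by (intro E; apply Hne; subst; auto).
  destruct (code_differ x y Hxy) as [n Hn].
  set (C := fun a => agree a (code x) (S n)).
  apply (Hconn (fun q => A q /\ C (code (point_of q))) (fun q => A q /\ ~ C (code (point_of q)))).
  - apply (ropen_prefix_local A (S n) C); auto. intros a b Hab Ha i Hi. rewrite <- Hab; auto.
  - apply (ropen_prefix_local A (S n) (fun a => ~ C a)); auto.
    intros a b Hab Ha Hb. apply Ha. intros i Hi. rewrite Hab; auto.
  - intros q Aq0. destruct (classic (C (code (point_of q)))); [left|right]; auto.
  - intros q [[_ H1] [_ H2]]. auto.
  - exists (embed x). split; auto. rewrite point_of_embed. intros i _. reflexivity.
  - exists (embed y). split; auto. rewrite point_of_embed. intro X. apply Hn. symmetry. apply X. lia.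
Qed.

Definition flip_at (f : nat -> bool) (n : nat) : nat -> bool := fun i => if Nat.eqb i n then negb (f i) else f i.

Lemma flip_at_ne f n : flip_at f n <> f.
Proof.
  intro E. apply (f_equal (fun g => g n)) in E. unfold flip_at in E. rewrite Nat.eqb_refl in E.
  destruct (f n); discriminate.
Qed.

Lemma agree_bits_flip_at f n : agree (bits f) (bits (flip_at f n)) n.
Proof. intros i Hi. unfold bits, flip_at. rewrite (proj2 (Nat.eqb_neq i n)) by lia. reflexivity. Qed.

Lemma exists_close_point x n : exists y, y <> x /\ agree (code x) (code y) n.
Proof.
  destruct x as [z|b t|].
  - exists (Zend (flip_at z n)). split; [intro E; injection E; apply flip_at_ne|].
    intros [|i] Hi; auto. rewrite !code_Zend_S. apply (agree_bits_flip_at z n). lia.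
  - exists (Bush b (flip_at t n)). split; [intro E; injection E; apply flip_at_ne|].
    apply (agree_weaken _ _ (length (bush_header b) + n)); [lia|]. apply agree_prepend, agree_bits_flip_at.
  - exists (Bush (Pb n) (fun _ => false)). split; [discriminate|].
    intros [|i] Hi; [reflexivity|]. rewrite code_Pfix_S, code_Pb, (proj2 (Nat.ltb_lt i n)) by lia. reflexivity.
Qed.

Lemma no_isolated_points_Wcantor : no_isolated_points Wcantor euclid.
Proof.
  intros q [x ->] e He. destruct (embed_close x e He) as [n Hn].
  destruct (exists_close_point x n) as [y [Hyx Hy]]. exists (embed y). split; [exists y; auto|].
  split; auto. intro E. apply Hyx, embed_inj, E.
Qed.

Lemma cantor_set_Wcantor : cantor_set Wcantor euclid.
Proof.
  split; [apply compact_Wcantor|].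
  split; [apply totally_disconnected_Wcantor|apply no_isolated_points_Wcantor].
Qed.

(** * The metric *)

Definition base_weight (b : bush_index) : R :=
  match b with Zb r => end_weight (r ++ [false]) | Pb n => fix_weight n end.
Definition bush_rank (b : bush_index) : Z :=
  match b with Zb r => word_rank (r ++ [false]) | Pb n => Z.of_nat n end.
Definition bush_weight (b : bush_index) (L : nat) : R := tail_weight (base_weight b) (ratio (bush_rank b)) L.

Lemma base_weight_pos b : 0 < base_weight b.
Proof. destruct b; [apply end_weight_pos|apply fix_weight_pos]. Qed.

Lemma prefix_bits t L : prefix (bits t) L = map b2n (prefix t L).
Proof. unfold prefix, bits. rewrite map_map. reflexivity. Qed.

Lemma weight_code_Zend z k : weight (prefix (code (Zend z)) (S k)) = end_weight (prefix z k).
Proof.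
  change (S k) with (length [0%nat] + k)%nat. simpl code. rewrite prefix_prepend, prefix_bits. simpl.
  rewrite <- (app_nil_r (map b2n (prefix z k))), zweight_bits. reflexivity.
Qed.

Lemma weight_code_Bush b t L : weight (prefix (code (Bush b t)) (length (bush_header b) + L)) = bush_weight b L.
Proof.
  simpl code. rewrite prefix_prepend, prefix_bits. destruct b as [r|n]; simpl.
  - replace (map b2n r ++ [0%nat; 2%nat]) with (map b2n (r ++ [false]) ++ [2%nat])
      by (rewrite map_app, <- app_assoc; auto).
    rewrite <- app_assoc, zweight_bits. simpl. rewrite length_map, length_prefix. reflexivity.
  - rewrite <- app_assoc, pweight_zeros. simpl. rewrite length_map, length_prefix. reflexivity.
Qed.

Lemma weight_code_Pfix k : weight (prefix (code Pfix) (S k)) = fix_weight k.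
Proof.
  change (S k) with (length [1%nat] + k)%nat. simpl code. rewrite prefix_prepend. simpl.
  replace (prefix (fun _ => 0%nat) k) with (repeat 0%nat k ++ []).
  - rewrite pweight_zeros. reflexivity.
  - rewrite app_nil_r. unfold prefix. rewrite map_const, length_seq. reflexivity.
Qed.

Lemma weight_prefix_small x e : 0 < e -> exists N, weight (prefix (code x) N) < e.
Proof.
  intro He. destruct x as [z|b t|].
  - destruct (geom_small 2 (/2) e ltac:(lra) ltac:(lra) He) as [k Hk]. specialize (Hk k (le_n k)).
    exists (S k).
    rewrite weight_code_Zend. pose proof (end_weight_le (prefix z k)) as Hle. rewrite length_prefix in Hle.
    replace (2 / 2 ^ k) with (2 * (/2) ^ k) in Hle by (rewrite pow_inv; field; apply pow_nonzero; lra). lra.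
  - destruct (geom_small (base_weight b) (/2) e (base_weight_pos b) ltac:(lra) He) as [L HL].
    specialize (HL L (le_n L)).
    exists (length (bush_header b) + L)%nat. rewrite weight_code_Bush. unfold bush_weight.
    pose proof (tail_weight_le_half (base_weight b) (ratio (bush_rank b)) L (base_weight_pos b) (ratio_bounds _)).
    lra.
  - destruct (geom_small 1 (/2) e ltac:(lra) ltac:(lra) He) as [k Hk]. specialize (Hk k (le_n k)). exists (S k).
    rewrite weight_code_Pfix. unfold fix_weight. lra.
Qed.

Definition code_dist (a b : nat -> nat) : R := fd_dist weight a b.
Definition dW (q q' : R * R) : R := code_dist (code (point_of q)) (code (point_of q')).

Lemma code_dist_eq a b n : agree a b n -> a n <> b n -> code_dist a b = weight (prefix a n).
Proof. apply fd_dist_eq. Qed.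
Lemma code_dist_same a b : (forall n, a n = b n) -> code_dist a b = 0.
Proof. apply fd_dist_same. Qed.
Lemma code_dist_cases a b :
  (forall n, a n = b n) \/ exists n, agree a b n /\ a n <> b n /\ code_dist a b = weight (prefix a n).
Proof. apply fd_dist_cases. Qed.
Lemma code_dist_lt_agree a b n : code_dist a b < weight (prefix a n) -> agree a b n.
Proof. apply fd_dist_lt_agree, weight_snoc. Qed.
Lemma code_dist_le_agree a b n : agree a b n -> code_dist a b <= weight (prefix a n).
Proof. apply fd_dist_le_agree; [apply weight_pos|apply weight_snoc]. Qed.

Lemma metric_dW : is_metric_on Wcantor dW.
Proof.
  unfold dW, code_dist. split; [|split; [|split]].
  - intros. apply fd_dist_nonneg, weight_pos.
  - intros q q' [x ->] [y ->]. rewrite !point_of_embed. split.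
    + intro H. f_equal. apply code_inj, (fd_dist_eq0 weight weight_pos), H.
    + intro H. apply embed_inj in H. subst. apply fd_dist_same. auto.
  - intros. apply fd_dist_sym.
  - intros. apply fd_dist_triangle; [apply weight_pos|apply weight_snoc].
Qed.

Lemma compatible_dW : compatible Wcantor dW euclid.
Proof.
  intro U. split; intros [HU Ho]; split; auto; intros q Uq; destruct (HU q Uq) as [x ->];
    destruct (Ho _ Uq) as [e [He Hball]].
  - destruct (weight_prefix_small x e He) as [N HN]. exists (/10 * (/5) ^ N).
    split; [pose proof (pow_inv5_pos N); lra|].
    intros q' [y ->] Hd. apply Hball; [exists y; auto|]. unfold dW. rewrite !point_of_embed.
    pose proof (code_dist_le_agree _ _ _ (agree_of_euclid_lt _ _ _ Hd)). lra.
  - destruct (embed_close x e He) as [N HN]. exists (weight (prefix (code x) N)). split; [apply weight_pos|].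
    intros q' [y ->] Hd. apply Hball; [exists y; auto|]. unfold dW in Hd. rewrite !point_of_embed in Hd.
    apply HN, code_dist_lt_agree, Hd.
Qed.

(** * G is a homeomorphism *)

Lemma firstn_repeat_le {A} k n (x : A) : (k <= n)%nat -> firstn k (repeat x n) = repeat x k.
Proof. revert n; induction k as [|k IH]; intros [|n] H; simpl; auto; [lia|]. rewrite IH; auto. lia. Qed.

Lemma agree_Zend_Zend z z' K : agree (code (Zend z)) (code (Zend z')) (S K) <-> prefix z K = prefix z' K.
Proof.
  rewrite prefix_eq_agree. split; intros H i Hi.
  - specialize (H (S i) ltac:(lia)). rewrite !code_Zend_S in H. apply b2n_inj, H.
  - destruct i as [|i]; [reflexivity|]. rewrite !code_Zend_S, H by lia. reflexivity.
Qed.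

Lemma agree_Zend_Zb z r t K : agree (code (Zend z)) (code (Bush (Zb r) t)) (S (S K)) ->
  (K <= length r)%nat /\ prefix z K = firstn K r.
Proof.
  intro H. assert (HK : (K <= length r)%nat).
  { destruct (Nat.le_gt_cases K (length r)); auto. exfalso.
    specialize (H (S (S (length r))) ltac:(lia)). rewrite code_Zend_S, code_Zb in H.
    rewrite (proj2 (Nat.ltb_ge _ _)), (proj2 (Nat.eqb_neq _ _)), Nat.eqb_refl in H by lia.
    destruct (z _); discriminate. }
  split; auto. apply nth_ext with false false; [rewrite length_prefix, length_firstn; lia|].
  intros j Hj. rewrite length_prefix in Hj. rewrite nth_prefix, nth_firstn, (proj2 (Nat.ltb_lt _ _) Hj) by auto.
  specialize (H (S j) ltac:(lia)). rewrite code_Zend_S, code_Zb, (proj2 (Nat.ltb_lt _ _)) in H by lia.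
  apply b2n_inj, H.
Qed.

Lemma agree_Zend_Zb_of_prefix z r t K : (K <= length r)%nat -> prefix z K = firstn K r ->
  agree (code (Zend z)) (code (Bush (Zb r) t)) (S K).
Proof.
  intros HK Hz [|i] Hi; [reflexivity|]. rewrite code_Zend_S, code_Zb, (proj2 (Nat.ltb_lt _ _)) by lia.
  rewrite <- (nth_prefix z K i false), Hz, nth_firstn, (proj2 (Nat.ltb_lt _ _)) by lia. reflexivity.
Qed.

Lemma agree_Pfix_Pb n t N : agree (code Pfix) (code (Bush (Pb n) t)) (S N) <-> (N <= n)%nat.
Proof.
  split.
  - intro H. destruct (Nat.le_gt_cases N n); auto. specialize (H (S n) ltac:(lia)).
    rewrite code_Pfix_S, code_Pb, Nat.ltb_irrefl, Nat.eqb_refl in H. discriminate.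
  - intros HN [|i] Hi; [reflexivity|]. rewrite code_Pfix_S, code_Pb, (proj2 (Nat.ltb_lt _ _)) by lia. reflexivity.
Qed.

Lemma agree_Bush_step b t y N :
  agree (code (Bush b t)) (code y) (length (bush_header b) + N) ->
  forall f, exists t', y = Bush b t' /\
    agree (code (Bush (f b) t)) (code (Bush (f b) t')) (length (bush_header (f b)) + N).
Proof.
  intros H f. destruct (header_determines_bush b t y) as [t' ->].
  - apply agree_sym, (agree_weaken _ _ _ _ (Nat.le_add_r _ N) H).
  - exists t'. split; auto. apply agree_prepend, (agree_prepend_inv (bush_header b)), H.
Qed.

Lemma prefix_continuous_step : prefix_continuous step.
Proof.
  intros x N. destruct x as [z|b t|].
  - exists (S (S (S N))). intros y H. apply (agree_weaken _ _ (S N)); [lia|].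
    destruct y as [z'|[r|n] t'|]; try (specialize (H 0%nat ltac:(lia)); discriminate).
    + apply agree_Zend_Zend. apply (agree_weaken _ _ _ (S N)), agree_Zend_Zend in H; [|lia].
      simpl. rewrite !prefix_odometer, H. reflexivity.
    + apply agree_Zend_Zb in H. destruct H as [HK Hz].
      assert (Hodo : prefix (odometer z) N = word_inc (firstn N r)).
      { rewrite prefix_odometer, <- (firstn_prefix z (S N) N), Hz, firstn_firstn by lia.
        rewrite Nat.min_l by lia. reflexivity. }
      cbn [step index_succ]. destruct (all_ones r) eqn:Ea.
      * destruct r as [|c r']; [simpl in HK; lia|]. simpl in HK.
        apply agree_Zend_Zb_of_prefix; [rewrite repeat_length; lia|].
        apply all_ones_repeat in Ea. rewrite Hodo, Ea, !firstn_repeat_le, word_inc_ones by (simpl; lia).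
        reflexivity.
      * apply agree_Zend_Zb_of_prefix; [rewrite length_word_inc; lia|].
        rewrite Hodo, firstn_word_inc. reflexivity.
  - exists (length (bush_header b) + N)%nat. intros y H.
    destruct (agree_Bush_step b t y N H index_succ) as [t' [-> H']].
    apply (agree_weaken _ _ _ N) in H'; [exact H'|lia].
  - exists (S N). intros y H. destruct y as [z'|[r|n] t'|]; try (specialize (H 0%nat ltac:(lia)); discriminate).
    + apply (agree_weaken _ _ (S N)); [lia|]. apply agree_Pfix_Pb. apply agree_Pfix_Pb in H. lia.
    + intros i _. reflexivity.
Qed.

Lemma prefix_continuous_step_inv : prefix_continuous step_inv.
Proof.
  intros x N. destruct x as [z|b t|].
  - exists (S (S (S N))). intros y H. apply (agree_weaken _ _ (S N)); [lia|].
    destruct y as [z'|[r|n] t'|]; try (specialize (H 0%nat ltac:(lia)); discriminate).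
    + apply agree_Zend_Zend. apply (agree_weaken _ _ _ (S N)), agree_Zend_Zend in H; [|lia].
      simpl. rewrite !prefix_odometer_inv, H. reflexivity.
    + apply agree_Zend_Zb in H. destruct H as [HK Hz].
      assert (Hodo : prefix (odometer_inv z) N = word_dec (firstn N r)).
      { rewrite prefix_odometer_inv, <- (firstn_prefix z (S N) N), Hz, firstn_firstn by lia.
        rewrite Nat.min_l by lia. reflexivity. }
      cbn [step_inv index_pred]. destruct (all_zeros r) eqn:Ea.
      * apply agree_Zend_Zb_of_prefix; [rewrite repeat_length; lia|].
        apply all_zeros_repeat in Ea. rewrite Hodo, firstn_repeat_le by lia.
        rewrite Ea, firstn_repeat_le, word_dec_zeros by lia. reflexivity.
      * apply agree_Zend_Zb_of_prefix; [rewrite length_word_dec; lia|].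
        rewrite Hodo, firstn_word_dec. reflexivity.
  - exists (length (bush_header b) + N)%nat. intros y H.
    destruct (agree_Bush_step b t y N H index_pred) as [t' [-> H']].
    apply (agree_weaken _ _ _ N) in H'; [exact H'|lia].
  - exists (S (S N)). intros y H.
    destruct y as [z'|[r|n] t'|]; try (specialize (H 0%nat ltac:(lia)); discriminate).
    + apply agree_Pfix_Pb in H. destruct n as [|n]; [lia|].
      apply (agree_weaken _ _ (S N)); [lia|]. apply agree_Pfix_Pb. lia.
    + intros i _. reflexivity.
Qed.

Definition Gmap (q : R * R) : R * R := embed (step (point_of q)).
Definition Gmap_inv (q : R * R) : R * R := embed (step_inv (point_of q)).

Lemma Gmap_embed x : Gmap (embed x) = embed (step x).
Proof. unfold Gmap. rewrite point_of_embed. reflexivity. Qed.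

Lemma homeomorphism_Gmap : homeomorphism_on Wcantor euclid Gmap.
Proof.
  split; [|split].
  - intros q _. exists (step (point_of q)). reflexivity.
  - apply continuous_of_prefix_continuous, prefix_continuous_step.
  - exists Gmap_inv. split; [|split; [|split]].
    + intros q _. exists (step_inv (point_of q)). reflexivity.
    + apply continuous_of_prefix_continuous, prefix_continuous_step_inv.
    + intros q [x ->]. unfold Gmap_inv. rewrite Gmap_embed, point_of_embed, step_inv_step. reflexivity.
    + intros q [x ->]. unfold Gmap_inv. rewrite point_of_embed, Gmap_embed, step_step_inv. reflexivity.
Qed.

(** * G has the (LRS) property for dW *)

Definition differ_first {A} (a b : nat -> A) (n : nat) : Prop := agree a b n /\ a n <> b n.

(* The three ways in which the code [0 z] of [Zend z] can first differ, at position
   [S j], from the code [0 r 0 2 t] of a point of the bush [Zb r]. *)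
Definition Zb_exit (z : nat -> bool) (r : list bool) (j : nat) : Prop :=
  ((j < length r)%nat /\ prefix z j = firstn j r /\ z j <> nth j r false) \/
  (j = length r /\ prefix z j = r /\ z j = true) \/
  (j = S (length r) /\ prefix z j = r ++ [false]).

Lemma Zb_exit_of_differ_first z r t j :
  differ_first (code (Zend z)) (code (Bush (Zb r) t)) (S j) -> Zb_exit z r j.
Proof.
  intros [A Df]. rewrite code_Zend_S, code_Zb in Df.
  assert (Hj : (j <= S (length r))%nat).
  { destruct (Nat.le_gt_cases j (S (length r))); auto. exfalso. specialize (A (S (S (length r))) ltac:(lia)).
    rewrite code_Zend_S, code_Zb, (proj2 (Nat.ltb_ge _ _)), (proj2 (Nat.eqb_neq _ _)), Nat.eqb_refl in A by lia.
    destruct (z _); discriminate. }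
  assert (Hpre : forall k, (k <= j)%nat -> (k <= length r)%nat -> prefix z k = firstn k r).
  { intros k Hk1 Hk2. apply nth_ext with false false; [rewrite length_prefix, length_firstn; lia|].
    intros i Hi. rewrite length_prefix in Hi. rewrite nth_prefix, nth_firstn, (proj2 (Nat.ltb_lt _ _)) by lia.
    specialize (A (S i) ltac:(lia)). rewrite code_Zend_S, code_Zb, (proj2 (Nat.ltb_lt _ _)) in A by lia.
    apply b2n_inj, A. }
  unfold Zb_exit. destruct (Nat.lt_trichotomy j (length r)) as [L|[->|L]].
  - left. rewrite (proj2 (Nat.ltb_lt _ _)) in Df by lia. split; auto. split; [apply Hpre; lia|].
    intro E. apply Df. rewrite E. reflexivity.
  - right; left. rewrite Nat.ltb_irrefl, Nat.eqb_refl in Df. rewrite Hpre, firstn_all by lia.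
    split; auto. split; auto. destruct (z (length r)); [reflexivity|contradiction].
  - right; right. assert (j = S (length r)) as -> by lia. split; auto.
    rewrite prefix_S, Hpre, firstn_all by lia. f_equal.
    specialize (A (S (length r)) ltac:(lia)). rewrite code_Zend_S, code_Zb, Nat.ltb_irrefl, Nat.eqb_refl in A.
    destruct (z (length r)); [discriminate|reflexivity].
Qed.

Lemma differ_first_of_Zb_exit z r t j :
  Zb_exit z r j -> differ_first (code (Zend z)) (code (Bush (Zb r) t)) (S j).
Proof.
  intro H. assert (Hz : forall i, (i < j)%nat -> (i < length r)%nat -> z i = nth i r false).
  { intros i Hi1 Hi2. rewrite <- (nth_prefix z j i false) by lia.
    destruct H as [[_ [-> _]]|[[_ [-> _]]|[_ ->]]].
    - rewrite nth_firstn, (proj2 (Nat.ltb_lt _ _)) by lia. reflexivity.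
    - reflexivity.
    - rewrite app_nth1 by lia. reflexivity. }
  split.
  - intros [|i] Hi; [reflexivity|]. rewrite code_Zend_S, code_Zb.
    destruct (Nat.ltb_spec i (length r)); [rewrite Hz by lia; reflexivity|].
    destruct (Nat.eqb_spec i (length r)) as [->|]; [|destruct H as [[X _]|[[X _]|[X _]]]; lia].
    destruct H as [[X _]|[[X _]|[-> H]]]; try lia.
    rewrite <- (nth_prefix z (S (length r)) (length r) false), H, app_nth2, Nat.sub_diag by lia. reflexivity.
  - rewrite code_Zend_S, code_Zb. destruct H as [[X [_ H]]|[[-> [_ H]]|[-> _]]].
    + rewrite (proj2 (Nat.ltb_lt _ _)) by lia. intro E. apply H, b2n_inj, E.
    + rewrite Nat.ltb_irrefl, Nat.eqb_refl, H. discriminate.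
    + rewrite (proj2 (Nat.ltb_ge _ _)), (proj2 (Nat.eqb_neq _ _)), Nat.eqb_refl by lia.
      destruct (z _); discriminate.
Qed.

Lemma differ_first_Zend_odometer z z' j :
  differ_first (code (Zend z)) (code (Zend z')) (S j) ->
  differ_first (code (Zend (odometer z))) (code (Zend (odometer z'))) (S j).
Proof.
  intros [A Df]. apply agree_Zend_Zend in A. rewrite !code_Zend_S in Df. split.
  - apply agree_Zend_Zend. rewrite !prefix_odometer, A. reflexivity.
  - rewrite !code_Zend_S, !odometer_at, A. intro E. apply Df.
    destruct (all_ones (prefix z' j)), (z j), (z' j); simpl in *; auto; discriminate.
Qed.

Lemma Zb_exit_inc z r j : all_ones r = false -> Zb_exit z r j -> Zb_exit (odometer z) (word_inc r) j.
Proof.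
  intros Ea [[X [P1 P2]]|[[X [P1 P2]]|[X P1]]]; unfold Zb_exit; rewrite length_word_inc.
  - left. split; auto. split; [rewrite prefix_odometer, P1, firstn_word_inc; reflexivity|].
    rewrite odometer_at, nth_word_inc, P1 by auto.
    destruct (all_ones (firstn j r)), (z j), (nth j r false); simpl in *; congruence.
  - right; left. split; auto. split; [rewrite prefix_odometer, P1; reflexivity|].
    rewrite odometer_at, P1, Ea. exact P2.
  - right; right. split; auto. rewrite prefix_odometer, P1, word_inc_snoc, Ea. reflexivity.
Qed.

Lemma Zb_exit_ones z m j : ~ flip_maximal (prefix z j) ->
  Zb_exit z (repeat true (S m)) j -> Zb_exit (odometer z) (repeat false m) j.
Proof.
  intros Hmax C. unfold Zb_exit in *. rewrite repeat_length in *.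
  destruct C as [[X [P1 P2]]|[[X [P1 P2]]|[X P1]]].
  - rewrite firstn_repeat_le in P1 by lia. rewrite nth_repeat_lt in P2 by lia.
    assert (Po : prefix (odometer z) j = repeat false j) by (rewrite prefix_odometer, P1; apply word_inc_ones).
    assert (Oj : odometer z j = true).
    { rewrite odometer_at, P1, all_ones_ones. destruct (z j); [contradiction|reflexivity]. }
    destruct (Nat.lt_ge_cases j m).
    + left. split; auto. rewrite firstn_repeat_le, nth_repeat_lt, Oj by lia. split; [exact Po|discriminate].
    + right; left. split; [lia|]. split; auto. rewrite Po. f_equal. lia.
  - right; right. split; [lia|]. rewrite prefix_odometer, P1, word_inc_ones.
    replace (S m) with (m + 1)%nat by lia. rewrite repeat_app. reflexivity.
  - exfalso. apply Hmax. rewrite P1. apply flip_maximal_ones.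
Qed.

Lemma differ_first_step_Zend z y j : (2 <= j)%nat -> ~ flip_maximal (prefix z j) ->
  differ_first (code (Zend z)) (code y) (S j) -> differ_first (code (step (Zend z))) (code (step y)) (S j).
Proof.
  intros Hj Hmax Hd. destruct y as [z'|[r|n] t|]; try (specialize (proj1 Hd 0%nat ltac:(lia)); discriminate).
  - apply differ_first_Zend_odometer, Hd.
  - apply Zb_exit_of_differ_first in Hd. cbn [step index_succ].
    destruct (all_ones r) eqn:Ea; [|apply differ_first_of_Zb_exit, Zb_exit_inc; auto].
    apply all_ones_repeat in Ea. destruct r as [|c r]; [destruct Hd as [[X _]|[[X _]|[X _]]]; simpl in X; lia|].
    rewrite Ea in Hd. apply differ_first_of_Zb_exit, Zb_exit_ones; auto.
Qed.

Lemma flip_maximal_prefix_eventually z :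
  exists K, (2 <= K)%nat /\ forall j, (K <= j)%nat -> ~ flip_maximal (prefix z j).
Proof.
  destruct (classic (exists j0, flip_maximal (prefix z j0))) as [[j0 H0]|H].
  - exists (Nat.max 2 (S j0)). split; [lia|]. intros j Hj Hb.
    assert (Hz : forall k, flip_maximal (prefix z k) ->
              (1 <= k)%nat /\ z (k - 1)%nat = false /\ forall i, (i < k - 1)%nat -> z i = true).
    { intros [|k] Hk; unfold flip_maximal in Hk; rewrite length_prefix in Hk; [discriminate|].
      replace (S k - 1)%nat with k in * by lia. split; [lia|]. split.
      - rewrite <- (nth_prefix z (S k) k false), Hk, app_nth2, repeat_length, Nat.sub_diag
          by (rewrite ?repeat_length; lia).
        reflexivity.
      - intros i Hi. rewrite <- (nth_prefix z (S k) i false), Hk, app_nth1 by (rewrite ?repeat_length; lia).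
        apply nth_repeat_lt. lia. }
    destruct (Hz _ H0) as [_ [A2 _]]. destruct (Hz _ Hb) as [_ [_ B3]].
    rewrite B3 in A2 by lia. discriminate.
  - exists 2%nat. split; auto. intros j _ X. apply H. eauto.
Qed.

Definition lrs_at (x : point) : Prop :=
  exists e, 0 < e /\ forall y, 0 < code_dist (code x) (code y) < e ->
    code_dist (code (step x)) (code (step y)) < code_dist (code x) (code y).

Lemma lrs_at_Zend z : lrs_at (Zend z).
Proof.
  destruct (flip_maximal_prefix_eventually z) as [K [HK2 HK]]. exists (/ 2 ^ K).
  split; [apply Rinv_0_lt_compat, pow2_pos|]. intros y [Hd1 Hd2].
  destruct (code_dist_cases (code (Zend z)) (code y)) as [E|[m [A [Df Dm]]]];
    [rewrite code_dist_same in Hd1; auto; lra|].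
  assert (HK4 : / 2 ^ K <= /4).
  { replace (/4) with (/ 2 ^ 2) by (simpl; lra). apply inv_pow2_antitone; auto. }
  destruct m as [|j]; [change (weight (prefix (code (Zend z)) 0)) with 4 in Dm; lra|].
  rewrite weight_code_Zend in Dm. pose proof (end_weight_gt (prefix z j)) as Hgt. rewrite length_prefix in Hgt.
  assert (HjK : (K < j)%nat).
  { destruct (Nat.lt_ge_cases K j) as [|HjK]; auto. pose proof (inv_pow2_antitone j K HjK). lra. }
  destruct (differ_first_step_Zend z y j ltac:(lia) (HK j ltac:(lia)) (conj A Df)) as [A' Df'].
  rewrite (code_dist_eq _ _ _ A' Df'), Dm. cbn [step]. rewrite weight_code_Zend, prefix_odometer.
  apply end_weight_inc; [|apply HK; lia].
  intro X. apply (f_equal (@length bool)) in X. rewrite length_prefix in X. simpl in X. lia.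
Qed.

Lemma bush_rank_succ b : bush_rank (index_succ b) = (bush_rank b + 1)%Z.
Proof.
  destruct b as [r|n]; cbn [index_succ bush_rank]; [|lia].
  destruct (all_ones r) eqn:Ea.
  - destruct r as [|c r]; [reflexivity|]. apply all_ones_repeat in Ea. rewrite Ea. simpl length.
    cbn [bush_rank]. unfold word_rank.
    rewrite !length_app, !repeat_length, !word_val_snoc, word_val_zeros, !repeat_length. simpl b2n.
    pose proof (word_val_ones (S (length r))). simpl Nat.pow in *. rewrite !Nat.add_1_r. simpl Nat.pow. lia.
  - cbn [bush_rank]. unfold word_rank. rewrite !length_app, length_word_inc, !word_val_snoc, word_val_inc by auto.
    simpl b2n. lia.
Qed.

Lemma tail_weight_eventually_lt a a' th th' : 0 < a -> 0 < th' < th ->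
  exists L0, forall L, (L0 <= L)%nat -> tail_weight a' th' L < tail_weight a th L.
Proof.
  intros Ha Hth. unfold tail_weight. set (q := th' / th).
  assert (Hq : 0 < q < 1).
  { unfold q. split; [apply Rdiv_lt_0_compat; lra|].
    apply Rmult_lt_reg_r with th; [lra|]. unfold Rdiv. rewrite Rmult_assoc, Rinv_l; lra. }
  destruct (Rle_lt_dec a' 0) as [Ha'|Ha'].
  - exists 0%nat. intros L _.
    pose proof (pow_lt th (S L) ltac:(lra)). pose proof (pow_lt th' (S L) ltac:(lra)). nra.
  - destruct (geom_small a' q a Ha' ltac:(lra) Ha) as [N HN]. exists N. intros L HL.
    assert (E : th' ^ S L = q ^ S L * th ^ S L) by (rewrite <- Rpow_mult_distr; f_equal; unfold q; field; lra).
    specialize (HN (S L) ltac:(lia)). pose proof (pow_lt th (S L) ltac:(lra)). rewrite E. nra.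
Qed.

Lemma bush_weight_succ_eventually_lt b :
  exists L0, forall L, (L0 <= L)%nat -> bush_weight (index_succ b) L < bush_weight b L.
Proof.
  apply tail_weight_eventually_lt; [apply base_weight_pos|].
  rewrite bush_rank_succ. split; [apply ratio_bounds|apply ratio_succ].
Qed.

Lemma lrs_at_Bush b t : lrs_at (Bush b t).
Proof.
  destruct (bush_weight_succ_eventually_lt b) as [L0 HL0]. exists (bush_weight b L0).
  split; [apply tail_weight_pos; [apply base_weight_pos|apply ratio_bounds]|].
  intros y [Hd1 Hd2]. rewrite <- (weight_code_Bush b t L0) in Hd2. apply code_dist_lt_agree in Hd2.
  destruct (agree_Bush_step b t y L0 Hd2 index_succ) as [t' [-> _]].
  destruct (code_dist_cases (code (Bush b t)) (code (Bush b t'))) as [E|[m [A [Df ->]]]];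
    [rewrite code_dist_same in Hd1; auto; lra|].
  assert (Hm : (length (bush_header b) + L0 <= m)%nat).
  { destruct (Nat.le_gt_cases (length (bush_header b) + L0) m); auto. exfalso. apply Df, Hd2. auto. }
  replace m with (length (bush_header b) + (m - length (bush_header b)))%nat in * by lia.
  set (L := (m - length (bush_header b))%nat) in *.
  rewrite weight_code_Bush. rewrite !code_Bush_tail in Df.
  cbn [step]. rewrite (code_dist_eq _ _ (length (bush_header (index_succ b)) + L)).
  - rewrite weight_code_Bush. apply HL0. lia.
  - apply agree_prepend, (agree_prepend_inv (bush_header b)), A.
  - rewrite !code_Bush_tail. exact Df.
Qed.

Lemma lrs_at_Pfix : lrs_at Pfix.
Proof.
  exists 4. split; [lra|]. intros y [Hd1 Hd2].
  destruct (code_dist_cases (code Pfix) (code y)) as [E|[m [A [Df Dm]]]];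
    [rewrite code_dist_same in Hd1; auto; lra|].
  destruct m as [|k]; [change (weight (prefix (code Pfix) 0)) with 4 in Dm; lra|].
  rewrite weight_code_Pfix in Dm.
  destruct y as [z|[r|n] t|]; try (specialize (A 0%nat ltac:(lia)); discriminate); [|contradiction].
  assert (n = k) as ->.
  { apply agree_Pfix_Pb in A. destruct (Nat.eq_dec n k); auto. exfalso. apply Df.
    rewrite code_Pfix_S, code_Pb, (proj2 (Nat.ltb_lt _ _)) by lia. reflexivity. }
  cbn [step index_succ]. rewrite (code_dist_eq _ _ (S (S k))), weight_code_Pfix, Dm.
  - apply fix_weight_S.
  - apply agree_Pfix_Pb. lia.
  - rewrite code_Pfix_S, code_Pb, Nat.ltb_irrefl, Nat.eqb_refl. discriminate.
Qed.

Lemma lrs_at_all x : lrs_at x.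
Proof. destruct x; [apply lrs_at_Zend|apply lrs_at_Bush|apply lrs_at_Pfix]. Qed.

Lemma LRS_Gmap : LRS Wcantor dW Gmap.
Proof.
  intros q [x ->]. destruct (lrs_at_all x) as [e [He H]]. exists e. split; auto.
  intros q' [y ->] Hd. unfold dW, Gmap in *. rewrite !point_of_embed in *. apply H, Hd.
Qed.

(** * Periodic points and non-transitivity *)

Lemma iter_Gmap n x : Nat.iter n Gmap (embed x) = embed (Nat.iter n step x).
Proof. induction n as [|n IH]; simpl; auto. rewrite IH, Gmap_embed. reflexivity. Qed.

Lemma iter_step_Bush n b t : Nat.iter n step (Bush b t) = Bush (Nat.iter n index_succ b) t.
Proof. induction n as [|n IH]; simpl; auto. rewrite IH. reflexivity. Qed.

Lemma iter_step_Zend n z : Nat.iter n step (Zend z) = Zend (Nat.iter n odometer z).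
Proof. induction n as [|n IH]; simpl; auto. rewrite IH. reflexivity. Qed.

Lemma bush_rank_iter n b : bush_rank (Nat.iter n index_succ b) = (bush_rank b + Z.of_nat n)%Z.
Proof. induction n as [|n IH]; simpl; [lia|]. rewrite bush_rank_succ, IH. lia. Qed.

Lemma periodic_points_Gmap :
  exists p, Wcantor p /\ Gmap p = p /\ forall x, Wcantor x -> (periodic_point Gmap x <-> x = p).
Proof.
  exists (embed Pfix). split; [exists Pfix; auto|]. split; [apply Gmap_embed|].
  intros q [x ->]. split.
  - intros [n [Hn E]]. rewrite iter_Gmap in E. apply embed_inj in E. f_equal.
    destruct x as [z|b t|]; auto; exfalso.
    + rewrite iter_step_Zend in E. injection E. apply odometer_aperiodic, Hn.
    + rewrite iter_step_Bush in E. injection E. intro Eb.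
      apply (f_equal bush_rank) in Eb. rewrite bush_rank_iter in Eb. lia.
  - intros ->. exists 1%nat. split; auto. apply Gmap_embed.
Qed.

Lemma iter_index_succ_Pb n m : Nat.iter n index_succ (Pb m) = Pb (n + m).
Proof. induction n as [|n IH]; simpl; auto. rewrite IH. reflexivity. Qed.

(* The bush [Pb 0] is a nonempty open set that never returns to itself. *)
Lemma not_transitive_Gmap : ~ transitive_on Wcantor euclid Gmap.
Proof.
  intro HT. set (c0 := code (Bush (Pb 0) (fun _ => false))).
  set (U := fun q => Wcantor q /\ agree (code (point_of q)) c0 2).
  assert (HU : ropen Wcantor euclid U).
  { apply (ropen_prefix_local Wcantor 2 (fun a => agree a c0 2)); auto.
    intros a b Hab Ha i Hi. rewrite <- Hab; auto. }
  assert (HUne : exists q, U q).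
  { exists (embed (Bush (Pb 0) (fun _ => false))). split; [eexists; eauto|].
    rewrite point_of_embed. intros i _. reflexivity. }
  destruct (HT U U HU HU HUne HUne) as [n [Hn [q [[[x ->] Ux] [_ Vq]]]]].
  rewrite point_of_embed in Ux. destruct (header_determines_bush (Pb 0) (fun _ => false) x) as [t ->]; auto.
  rewrite iter_Gmap, iter_step_Bush, iter_index_succ_Pb, point_of_embed in Vq.
  specialize (Vq 1%nat ltac:(lia)). unfold c0 in Vq. rewrite !code_Pb in Vq.
  destruct n as [|n]; [lia|]. discriminate.
Qed.

Theorem theoremE :
  exists (W : R * R -> Prop) (d : R * R -> R * R -> R) (G : R * R -> R * R),
    cantor_set W euclid /\
    is_metric_on W d /\ compatible W d euclid /\
    homeomorphism_on W euclid G /\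
    ~ transitive_on W euclid G /\
    LRS W d G /\
    (exists p, W p /\ G p = p /\ forall x, W x -> (periodic_point G x <-> x = p)).
Proof.
  exists Wcantor, dW, Gmap.
  split; [apply cantor_set_Wcantor|].
  split; [apply metric_dW|].
  split; [apply compatible_dW|].
  split; [apply homeomorphism_Gmap|].
  split; [apply not_transitive_Gmap|].
  split; [apply LRS_Gmap|].
  apply periodic_points_Gmap.
Qed.
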